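(* Let $(V,g_{ij},\rho,p)$ be a spherically symmetric static perfect fluid solution of the Euler–Einstein equations $\Delta V=4\pi(\rho+3p)V$, $R_{ij}=V^{-1}\nabla_i\nabla_jV+4\pi(\rho-p)g_{ij}$, $\nabla_ip=-V^{-1}(\rho+p)\nabla_iV$ with barotropic equation of state $\rho=\rho(p)$, and assume it is AFMD. Write $g=h(r)dr^2+r^2d\Omega^2$ and let $\{x^i\}$ be the Cartesian coordinates associated with $(r,\theta,\phi)$, so $d^3x=r^2dr\,d\Omega$. Then $$\int_{\mathbb{R}^3}(-\rho\,J_0)\,d^3x=\frac{M^2}{R}\Big(1-\frac{2M}{R}\Big)^{-1}$$ for solutions with finite extent, where $M$ is the mass and $R$ the radius of the fluid body, and $$\int_{\mathbb{R}^3}(-\rho\,J_0)\,d^3x=0$$ if the fluid extends to infinity. Here $J_0$ is evaluated at $p(x)$.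
   Context: Equation of state: $\rho$ piecewise continuous on $[0,p_{max}]$, positive for $p>0$, such that $\Gamma(p)=\int_0^p(\rho(p')+p')^{-1}dp'$ exists and $\lim_{p\to0}\rho^{-1}p$ exists. Define $H_0(p)=\rho+\rho e^{-\Gamma}+6pe^{-\Gamma}$ and $J_0(p)=\frac{1}{2\rho}[1-e^{-\Gamma(p)}]H_0(p)-3\rho^{-1}\int_0^pe^{-\Gamma(p')}\frac{1}{\rho(p')+p'}H_0(p')\,dp'$. The spacetime metric is $-V^2dt^2+g_{ij}dx^idx^j$, $V>0$. Finite extent: $p>0$ exactly for $r<R$, and the exterior is Schwarzschild, $V^2=1-2M/r$, $h=V^{-2}$ for $r\ge R$. Extending to infinity: $p>0$ everywhere. AFMD means that in suitable coordinates, for some $\epsilon>0$, $1-V=O^\infty(\|x\|^{-1})$, $g_{ij}-\delta_{ij}=O^\infty(\|x\|^{-1})$, $\rho=O^\infty(\|x\|^{-3-\epsilon})$ ($f=O^\infty(\|x\|^{-k})$ meaning $\partial^\alpha f=O(\|x\|^{-k-|\alpha|})$ for all $\alpha$). Regularity: $p(r)$ continuous and piecewise $\mathcal{C}^1$, $\rho(r)$ piecewise continuous, $V(r)$ $\mathcal{C}^1$ and piecewise $\mathcal{C}^2$. *)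

From Stdlib Require Import Reals List.
From Coquelicot Require Import Coquelicot.
Open Scope R_scope.

Definition pw_cont_on (f : R -> R) (a b : R) : Prop :=
  exists l : list R,
    (forall x, a <= x <= b -> ~ In x l ->
       filterlim f (within (fun y => a <= y <= b) (locally x)) (locally (f x))) /\
    (forall x, a < x <= b -> exists L, filterlim f (at_left x) (locally L)) /\
    (forall x, a <= x < b -> exists L, filterlim f (at_right x) (locally L)).

Definition Gam (rho : R -> R) (p : R) : R :=
  RInt_gen (fun q => / (rho q + q)) (at_right 0) (at_point p).

Definition H0 (rho : R -> R) (p : R) : R :=
  rho p + rho p * exp (- Gam rho p) + 6 * p * exp (- Gam rho p).

Definition J0 (rho : R -> R) (p : R) : R :=
  / (2 * rho p) * (1 - exp (- Gam rho p)) * H0 rho p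
  - 3 * / rho p *
    RInt (fun q => exp (- Gam rho q) * / (rho q + q) * H0 rho q) 0 p.

Definition eos (rho : R -> R) (pmax : R) : Prop :=
  0 < pmax /\
  pw_cont_on rho 0 pmax /\
  (forall q, 0 < q <= pmax -> 0 < rho q) /\
  (forall q, 0 < q <= pmax ->
     ex_RInt_gen (fun s => / (rho s + s)) (at_right 0) (at_point q)) /\
  (exists L, filterlim (fun q => / rho q * q) (at_right 0) (locally L)).

Definition locfin (S : R -> Prop) : Prop :=
  forall b, exists l : list R, forall x, S x -> x < b -> In x l.

Definition onesided_lims (g : R -> R) : Prop :=
  (forall r, 0 < r ->
     (exists L, filterlim g (at_left r) (locally L)) /\
     (exists L, filterlim g (at_right r) (locally L))) /\
  (exists L, filterlim g (at_right 0) (locally L)).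

Definition C0_half (f : R -> R) : Prop :=
  (forall r, 0 < r -> continuous f r) /\
  filterlim f (at_right 0) (locally (f 0)).

Definition C1_half (f : R -> R) : Prop :=
  C0_half f /\
  (forall r, 0 < r -> ex_derive f r /\ continuous (Derive f) r) /\
  (exists L, filterlim (Derive f) (at_right 0) (locally L)).

Definition pwC0_half (f : R -> R) : Prop :=
  exists S, locfin S /\
    (forall r, 0 < r -> ~ S r -> continuous f r) /\ onesided_lims f.

Definition pw_diff (f : R -> R) : Prop :=
  exists S, locfin S /\
    (forall r, 0 < r -> ~ S r -> ex_derive f r /\ continuous (Derive f) r) /\
    onesided_lims (Derive f).

Definition pwC1_half (f : R -> R) : Prop := C0_half f /\ pw_diff f.

Definition C1_pwC2_half (f : R -> R) : Prop := C1_half f /\ pw_diff (Derive f).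

(** Metric -V^2 dt^2 + h(r) dr^2 + r^2 dOmega^2; the 3-dimensional equations
      Delta V = 4 pi (rho + 3p) V,
      R_ij = V^{-1} nabla_i nabla_j V + 4 pi (rho - p) g_ij,
      nabla_i p = - V^{-1} (rho + p) nabla_i V
    written out in the coordinates (r, theta, phi) for g = h dr^2 + r^2 dOmega^2:
      R_rr = h'/(r h),  R_thth = 1 - 1/h + r h'/(2 h^2),  R_phph = sin^2 th R_thth,
      Hess_rr V = V'' - h' V'/(2h),  Hess_thth V = r V'/h,  Hess_phph = sin^2 th Hess_thth,
      Delta V = h^{-1} (V'' - h' V' /(2h) + 2 V'/r)
    (all other components vanish identically). *)
Definition field_eqs (rho : R -> R) (V h p : R -> R) : Prop :=
  exists S, locfin S /\
  forall r, 0 < r -> ~ S r ->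
    let rh := rho (p r) in
    let V1 := Derive V r in
    let V2 := Derive (Derive V) r in
    let h1 := Derive h r in
    ex_derive V r /\ ex_derive (Derive V) r /\ ex_derive h r /\ ex_derive p r /\
    / h r * (V2 - h1 * V1 / (2 * h r) + 2 * V1 / r)
      = 4 * PI * (rh + 3 * p r) * V r /\
    h1 / (r * h r)
      = / V r * (V2 - h1 * V1 / (2 * h r)) + 4 * PI * (rh - p r) * h r /\
    1 - / h r + r * h1 / (2 * (h r) ^ 2)
      = / V r * (r * V1 / h r) + 4 * PI * (rh - p r) * r ^ 2 /\
    Derive p r = - / V r * (rh + p r) * V1.

Definition regular (rho : R -> R) (V h p : R -> R) : Prop :=
  pwC1_half p /\ pwC0_half (fun r => rho (p r)) /\ C1_pwC2_half V /\ pwC1_half h.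

(** f = O^oo(|x|^{-k}) for a radial function f(|x|) on R^3, expressed through
    radial derivatives: for every n, the n-th radial derivative exists for
    large r and is O(r^{-k-n}).  (For radial functions this is equivalent to
    the Cartesian condition d^alpha f = O(|x|^{-k-|alpha|}).) *)
Definition Oinf (f : R -> R) (k : R) : Prop :=
  exists R0, 0 < R0 /\
    (forall n r, R0 < r -> ex_derive_n f n r) /\
    (forall n, exists C, forall r, R0 < r ->
        Rabs (Derive_n f n r) <= C * Rpower r (- (k + INR n))).

(** AFMD in the Cartesian coordinates x^i associated with (r, theta, phi):
    g_ij - delta_ij = (h(r) - 1) x_i x_j / r^2, which is O^oo(|x|^{-1}) iff
    h - 1 is. *)
Definition AFMD (rho : R -> R) (V h p : R -> R) : Prop :=
  exists eps, 0 < eps /\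
    Oinf (fun r => 1 - V r) 1 /\
    Oinf (fun r => h r - 1) 1 /\
    Oinf (fun r => rho (p r)) (3 + eps).

Definition finite_extent (V h p : R -> R) (M Rad : R) : Prop :=
  0 < Rad /\
  (forall r, 0 <= r -> (0 < p r <-> r < Rad)) /\
  (forall r, Rad <= r -> V r ^ 2 = 1 - 2 * M / r /\ h r = / (V r ^ 2)).

Definition extends_to_infinity (p : R -> R) : Prop :=
  forall r, 0 <= r -> 0 < p r.

(** Integrand of  int_{R^3} (- rho J_0(p(x))) d^3x  in polar coordinates,
    d^3x = r^2 dr dOmega, the angular integral giving 4 pi. *)
Definition radial_integrand (rho : R -> R) (p : R -> R) (r : R) : R :=
  4 * PI * r ^ 2 * (- (rho (p r) * J0 rho (p r))).

From Stdlib Require Import Reals Lra List.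
From Coquelicot Require Import Coquelicot.
Open Scope R_scope.

(** The radial integrand has an explicit antiderivative.  With u = exp(-Gamma(p)),
    I = int_0^p exp(-Gamma) (rho + q)^-1 H0 dq and the mass function m = r (1 - 1/h) / 2,
      G = u^2 r (m/r + 4 pi r^2 p)^2 h - (1 - u^2) m / 2 + (u^2 - u) 4 pi r^3 p + 4 pi r^3 I
    satisfies G' = 4 pi r^2 (- rho J0(p)) wherever the field equations hold, because they
    reduce there to the Tolman-Oppenheimer-Volkoff system; G is continuous and G(0) = 0.
    Since rho(p(r)) is only piecewise continuous, the fundamental theorem of calculus is
    applied between consecutive break points.
    For a body of radius R, p(R) = 0 gives u = 1, I = 0 and m(R) = M, hence
    G(R) = M^2/R (1 - 2M/R)^-1; outside the body the integrand vanishes, AFMD forcing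
    rho(0) = 0.  If the fluid extends to infinity, the field equations and AFMD give
    p = O(r^-3), so u -> 1, while 4 pi r^3 p = O(r^3 rho(p)) -> 0 and |I| <= 8 p; hence G -> 0. *)

(** * Continuity relative to an interval *)

Definition lim_right (g : R -> R) (x L : R) : Prop :=
  forall eps, 0 < eps -> exists d, 0 < d /\
    forall y, x < y < x + d -> Rabs (g y - L) < eps.

Definition lim_left (g : R -> R) (x L : R) : Prop :=
  forall eps, 0 < eps -> exists d, 0 < d /\
    forall y, x - d < y < x -> Rabs (g y - L) < eps.

Definition continuous_in (g : R -> R) (a b x : R) : Prop :=
  forall eps, 0 < eps -> exists d, 0 < d /\
    forall y, a <= y <= b -> Rabs (y - x) < d -> Rabs (g y - g x) < eps.

Lemma continuous_eps_delta (g : R -> R) (x : R) :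
  continuous g x <-> forall eps, 0 < eps -> exists d, 0 < d /\
    forall y, Rabs (y - x) < d -> Rabs (g y - g x) < eps.
Proof.
  split.
  - intros H eps Heps.
    destruct (proj1 (filterlim_locally g (g x)) H (mkposreal eps Heps)) as [d Hd].
    exists d. split; [apply cond_pos | exact Hd].
  - intros H. apply filterlim_locally. intros eps.
    destruct (H eps (cond_pos eps)) as [d [Hd H1]].
    exists (mkposreal d Hd). exact H1.
Qed.

Lemma lim_right_filterlim (g : R -> R) (x L : R) :
  filterlim g (at_right x) (locally L) -> lim_right g x L.
Proof.
  intros H eps Heps.
  destruct (proj1 (filterlim_locally g L) H (mkposreal eps Heps)) as [d Hd].
  exists d. split; [apply cond_pos|]. intros y Hy. apply Hd; [|lra].
  apply Rabs_lt_between'. simpl. lra.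
Qed.

Lemma lim_left_filterlim (g : R -> R) (x L : R) :
  filterlim g (at_left x) (locally L) -> lim_left g x L.
Proof.
  intros H eps Heps.
  destruct (proj1 (filterlim_locally g L) H (mkposreal eps Heps)) as [d Hd].
  exists d. split; [apply cond_pos|]. intros y Hy. apply Hd; [|lra].
  apply Rabs_lt_between'. simpl. lra.
Qed.

Lemma continuous_in_filterlim (g : R -> R) (a b x : R) :
  filterlim g (within (fun y => a <= y <= b) (locally x)) (locally (g x)) ->
  continuous_in g a b x.
Proof.
  intros H eps Heps.
  destruct (proj1 (filterlim_locally g (g x)) H (mkposreal eps Heps)) as [d Hd].
  exists d. split; [apply cond_pos|]. intros y Hy Hxy. exact (Hd y Hxy Hy).
Qed.

Lemma continuous_Rplus (f g : R -> R) (x : R) :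
  continuous f x -> continuous g x -> continuous (fun y => f y + g y) x.
Proof. exact (continuous_plus f g x). Qed.

Lemma continuous_Rmult (f g : R -> R) (x : R) :
  continuous f x -> continuous g x -> continuous (fun y => f y * g y) x.
Proof. exact (continuous_mult f g x). Qed.

Lemma continuous_Ropp (f : R -> R) (x : R) :
  continuous f x -> continuous (fun y => - f y) x.
Proof. exact (continuous_opp f x). Qed.

Lemma continuous_Rminus (f g : R -> R) (x : R) :
  continuous f x -> continuous g x -> continuous (fun y => f y - g y) x.
Proof. exact (continuous_minus f g x). Qed.

Lemma continuous_Rpow (f : R -> R) (n : nat) (x : R) :
  continuous f x -> continuous (fun y => f y ^ n) x.
Proof.
  intros Hf. induction n as [|n IH]; simpl.
  - apply continuous_const.
  - now apply continuous_Rmult.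
Qed.

Lemma continuous_Rdiv (f g : R -> R) (x : R) :
  continuous f x -> continuous g x -> g x <> 0 -> continuous (fun y => f y / g y) x.
Proof. intros. apply continuous_Rmult; [|apply continuous_Rinv_comp]; assumption. Qed.

Ltac continuity_R := repeat match goal with
  | |- continuous (fun _ => ?c) _ => apply continuous_const
  | |- continuous (fun t => @?f t + @?g t) _ => apply (continuous_Rplus f g)
  | |- continuous (fun t => @?f t - @?g t) _ => apply (continuous_Rminus f g)
  | |- continuous (fun t => @?f t * @?g t) _ => apply (continuous_Rmult f g)
  | |- continuous (fun t => - @?f t) _ => apply (continuous_Ropp f)
  | |- continuous (fun t => @?f t ^ ?n) _ => apply (continuous_Rpow f n)
  | |- continuous (fun t => @?f t / ?c) _ => apply (continuous_Rmult f (fun _ => / c))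
  | H : continuous _ ?x |- continuous _ ?x => exact H
  end.

Lemma continuous_in_of_continuous (g : R -> R) (a b x : R) :
  continuous g x -> continuous_in g a b x.
Proof.
  intros H eps Heps. destruct (proj1 (continuous_eps_delta g x) H eps Heps) as [d [Hd H1]].
  exists d. auto.
Qed.

Lemma continuous_in_subinterval (g : R -> R) (a b a' b' x : R) :
  a <= a' -> b' <= b -> continuous_in g a b x -> continuous_in g a' b' x.
Proof.
  intros Ha Hb H eps Heps. destruct (H eps Heps) as [d [Hd H1]].
  exists d. split; [exact Hd|]. intros y Hy. apply H1. lra.
Qed.

Lemma continuous_of_continuous_in (g : R -> R) (a b x : R) :
  a < x < b -> continuous_in g a b x -> continuous g x.
Proof.
  intros Hx H. apply continuous_eps_delta. intros eps Heps.
  destruct (H eps Heps) as [d [Hd H1]].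
  exists (Rmin d (Rmin (x - a) (b - x))). split.
  - repeat apply Rmin_pos; lra.
  - intros y Hy.
    assert (Rmin d (Rmin (x - a) (b - x)) <= d) by apply Rmin_l.
    assert (Rmin d (Rmin (x - a) (b - x)) <= Rmin (x - a) (b - x)) by apply Rmin_r.
    assert (Rmin (x - a) (b - x) <= x - a) by apply Rmin_l.
    assert (Rmin (x - a) (b - x) <= b - x) by apply Rmin_r.
    apply Rabs_lt_between' in Hy as Hy'. apply H1; lra.
Qed.

Lemma continuous_in_comp (g p : R -> R) (a b x y s : R) :
  continuous_in g a b (p s) -> continuous_in p x y s ->
  (forall t, x <= t <= y -> a <= p t <= b) -> x <= s <= y ->
  continuous_in (fun t => g (p t)) x y s.
Proof.
  intros Hg Hp Hab Hs eps Heps. destruct (Hg eps Heps) as [d1 [Hd1 H1]].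
  destruct (Hp d1 Hd1) as [d2 [Hd2 H2]]. exists d2. split; [exact Hd2|].
  intros t Ht Hts. apply H1; auto.
Qed.

Lemma continuous_comp_in (g p : R -> R) (a b r d : R) :
  continuous_in g a b (p r) -> continuous p r -> 0 < d ->
  (forall s, Rabs (s - r) < d -> a <= p s <= b) ->
  continuous (fun s => g (p s)) r.
Proof.
  intros Hg Hp Hd Hab. apply continuous_eps_delta. intros eps Heps.
  destruct (Hg eps Heps) as [d1 [Hd1 H1]].
  destruct (proj1 (continuous_eps_delta p r) Hp d1 Hd1) as [d2 [Hd2 H2]].
  exists (Rmin d d2). split; [apply Rmin_pos; lra|]. intros s Hs.
  assert (Rmin d d2 <= d) by apply Rmin_l. assert (Rmin d d2 <= d2) by apply Rmin_r.
  apply H1; [apply Hab | apply H2]; lra.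
Qed.

Lemma continuous_in_half_line (g : R -> R) :
  (forall s, 0 < s -> continuous g s) -> lim_right g 0 (g 0) ->
  forall x y s, 0 <= x -> x <= s <= y -> continuous_in g x y s.
Proof.
  intros Hc Hr x y s Hx Hs. destruct (Req_dec s 0) as [->|Hs0].
  - intros eps Heps. destruct (Hr eps Heps) as [d [Hd H]]. exists d. split; [exact Hd|].
    intros t Ht Hts. destruct (Req_dec t 0) as [->|Ht0].
    + rewrite Rminus_eq_0, Rabs_R0. exact Heps.
    + apply H. apply Rabs_lt_between' in Hts. lra.
  - apply continuous_in_of_continuous, Hc. lra.
Qed.

Lemma continuous_pos_near (g : R -> R) (r : R) :
  continuous g r -> 0 < g r ->
  exists d, 0 < d /\ forall s, Rabs (s - r) < d -> 0 < g s.
Proof.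
  intros H Hg. destruct (proj1 (continuous_eps_delta g r) H (g r) Hg) as [d [Hd H1]].
  exists d. split; [exact Hd|]. intros s Hs.
  specialize (H1 s Hs). apply Rabs_lt_between' in H1. lra.
Qed.

Lemma lim_right_nonneg (g : R -> R) (x L d0 : R) :
  0 < d0 -> lim_right g x L -> (forall y, x < y < x + d0 -> 0 <= g y) -> 0 <= L.
Proof.
  intros Hd0 H Hp. apply Rnot_lt_le. intros HL. destruct (H (- L) ltac:(lra)) as [d [Hd H1]].
  set (y := x + Rmin d d0 / 2).
  assert (Rmin d d0 <= d) by apply Rmin_l. assert (Rmin d d0 <= d0) by apply Rmin_r.
  assert (0 < Rmin d d0) by (apply Rmin_pos; lra).
  specialize (H1 y ltac:(unfold y; lra)). specialize (Hp y ltac:(unfold y; lra)).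
  apply Rabs_lt_between' in H1. lra.
Qed.

Lemma lim_left_nonneg (g : R -> R) (x L d0 : R) :
  0 < d0 -> lim_left g x L -> (forall y, x - d0 < y < x -> 0 <= g y) -> 0 <= L.
Proof.
  intros Hd0 H Hp. apply Rnot_lt_le. intros HL. destruct (H (- L) ltac:(lra)) as [d [Hd H1]].
  set (y := x - Rmin d d0 / 2).
  assert (Rmin d d0 <= d) by apply Rmin_l. assert (Rmin d d0 <= d0) by apply Rmin_r.
  assert (0 < Rmin d d0) by (apply Rmin_pos; lra).
  specialize (H1 y ltac:(unfold y; lra)). specialize (Hp y ltac:(unfold y; lra)).
  apply Rabs_lt_between' in H1. lra.
Qed.

Definition clamp (a b x : R) : R := Rmax a (Rmin b x).

Lemma clamp_in (a b x : R) : a <= b -> a <= clamp a b x <= b.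
Proof. intros. unfold clamp, Rmax, Rmin. repeat destruct Rle_dec; lra. Qed.

Lemma clamp_id (a b x : R) : a <= x <= b -> clamp a b x = x.
Proof. intros. unfold clamp, Rmax, Rmin. repeat destruct Rle_dec; lra. Qed.

Lemma clamp_lipschitz (a b x y : R) : Rabs (clamp a b y - clamp a b x) <= Rabs (y - x).
Proof.
  unfold clamp, Rmax, Rmin. repeat destruct Rle_dec;
  repeat match goal with |- context [Rabs ?z] =>
    destruct (Rcase_abs z); [rewrite (Rabs_left z) by lra | rewrite (Rabs_right z) by lra]
  end; lra.
Qed.

Lemma continuous_clamp (a b x : R) : continuous (clamp a b) x.
Proof.
  apply continuous_eps_delta. intros eps Heps. exists eps. split; [exact Heps|].
  intros y Hy. eapply Rle_lt_trans; [apply clamp_lipschitz | exact Hy].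
Qed.

Lemma continuous_comp_clamp (g : R -> R) (a b x : R) :
  a <= b -> continuous_in g a b (clamp a b x) -> continuous (fun y => g (clamp a b y)) x.
Proof.
  intros Hab H. apply continuous_eps_delta. intros eps Heps.
  destruct (H eps Heps) as [d [Hd H1]]. exists d. split; [exact Hd|].
  intros y Hy. apply H1; [now apply clamp_in|].
  eapply Rle_lt_trans; [apply clamp_lipschitz | exact Hy].
Qed.

Lemma continuous_clamp_of_in (g : R -> R) (x y t : R) : x < y ->
  (forall s, x <= s <= y -> continuous_in g x y s) -> continuous (fun t => g (clamp x y t)) t.
Proof. intros Hxy H. apply continuous_comp_clamp; [lra|]. apply H, clamp_in. lra. Qed.

Lemma continuous_in_of_clamp (g : R -> R) (a b x : R) :
  a <= x <= b -> continuous (fun y => g (clamp a b y)) x -> continuous_in g a b x.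
Proof.
  intros Hx H eps Heps. destruct (proj1 (continuous_eps_delta _ x) H eps Heps) as [d [Hd H1]].
  exists d. split; [exact Hd|]. intros y Hy Hxy.
  specialize (H1 y Hxy). rewrite !clamp_id in H1 by lra. exact H1.
Qed.

(** * Integration between break points *)

Definition patch_ends (g : R -> R) (a b La Lb x : R) : R :=
  if Req_EM_T x a then La else if Req_EM_T x b then Lb else g x.

Lemma patch_ends_left (g : R -> R) (a b La Lb : R) : patch_ends g a b La Lb a = La.
Proof. unfold patch_ends. now destruct (Req_EM_T a a). Qed.

Lemma patch_ends_right (g : R -> R) (a b La Lb : R) : a <> b -> patch_ends g a b La Lb b = Lb.
Proof. intros. unfold patch_ends. destruct (Req_EM_T b a); [congruence|]. now destruct (Req_EM_T b b). Qed.

Lemma patch_ends_inner (g : R -> R) (a b La Lb x : R) :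
  x <> a -> x <> b -> patch_ends g a b La Lb x = g x.
Proof. intros. unfold patch_ends. now destruct (Req_EM_T x a); [|destruct (Req_EM_T x b)]. Qed.

Lemma patch_ends_continuous_in (g : R -> R) (a b La Lb : R) :
  a < b -> (forall x, a < x < b -> continuous g x) -> lim_right g a La -> lim_left g b Lb ->
  forall x, a <= x <= b -> continuous_in (patch_ends g a b La Lb) a b x.
Proof.
  intros Hab Hc Hr Hl x Hx eps Heps.
  destruct (Req_dec x a) as [->|Hxa]; [|destruct (Req_dec x b) as [->|Hxb]].
  - destruct (Hr eps Heps) as [d [Hd H]].
    exists (Rmin d (b - a)). split; [apply Rmin_pos; lra|].
    assert (Rmin d (b - a) <= d) by apply Rmin_l. assert (Rmin d (b - a) <= b - a) by apply Rmin_r.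
    intros y Hy Hya. apply Rabs_lt_between' in Hya. rewrite patch_ends_left.
    destruct (Req_dec y a) as [->|Hya']; [now rewrite patch_ends_left, Rminus_eq_0, Rabs_R0|].
    rewrite patch_ends_inner by lra. apply H. lra.
  - destruct (Hl eps Heps) as [d [Hd H]].
    exists (Rmin d (b - a)). split; [apply Rmin_pos; lra|].
    assert (Rmin d (b - a) <= d) by apply Rmin_l. assert (Rmin d (b - a) <= b - a) by apply Rmin_r.
    intros y Hy Hyb. apply Rabs_lt_between' in Hyb. rewrite patch_ends_right by lra.
    destruct (Req_dec y b) as [->|Hyb']; [now rewrite patch_ends_right, Rminus_eq_0, Rabs_R0 by lra|].
    rewrite patch_ends_inner by lra. apply H. lra.
  - assert (Hx' : a < x < b) by lra.
    destruct (proj1 (continuous_eps_delta g x) (Hc x Hx') eps Heps) as [d [Hd H]].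
    exists (Rmin d (Rmin (x - a) (b - x))). split; [repeat apply Rmin_pos; lra|].
    intros y Hy Hxy.
    assert (Rmin d (Rmin (x - a) (b - x)) <= d) by apply Rmin_l.
    assert (Rmin d (Rmin (x - a) (b - x)) <= Rmin (x - a) (b - x)) by apply Rmin_r.
    assert (Rmin (x - a) (b - x) <= x - a) by apply Rmin_l.
    assert (Rmin (x - a) (b - x) <= b - x) by apply Rmin_r.
    apply Rabs_lt_between' in Hxy as Hxy'.
    rewrite !patch_ends_inner by lra. apply H. lra.
Qed.

Lemma continuous_nonneg_extension (g : R -> R) (a b : R) :
  a < b -> (forall x, a < x < b -> continuous g x) -> (forall x, a < x < b -> 0 <= g x) ->
  (exists La, lim_right g a La) -> (exists Lb, lim_left g b Lb) ->
  exists phi, (forall x, continuous phi x) /\ (forall x, 0 <= phi x) /\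
    (forall x, a < x < b -> phi x = g x).
Proof.
  intros Hab Hc Hg [La Hr] [Lb Hl].
  assert (HLa : 0 <= La) by (apply (lim_right_nonneg g a La (b - a)); auto; [lra | intros y Hy; apply Hg; lra]).
  assert (HLb : 0 <= Lb) by (apply (lim_left_nonneg g b Lb (b - a)); auto; [lra | intros y Hy; apply Hg; lra]).
  exists (fun x => patch_ends g a b La Lb (clamp a b x)). split; [|split].
  - intros x. apply continuous_comp_clamp; [lra|].
    apply patch_ends_continuous_in; auto. apply clamp_in. lra.
  - intros x. pose proof (clamp_in a b x ltac:(lra)).
    destruct (Req_dec (clamp a b x) a) as [->|]; [now rewrite patch_ends_left|].
    destruct (Req_dec (clamp a b x) b) as [->|]; [now rewrite patch_ends_right by lra|].
    rewrite patch_ends_inner by assumption. apply Hg. lra.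
  - intros x Hx. rewrite clamp_id, patch_ends_inner by lra. reflexivity.
Qed.

Lemma interval_prop_of_pieces (P : R -> R -> Prop) (l : list R) :
  (forall x, P x x) -> (forall x y z, P x y -> P y z -> P x z) ->
  forall a b, a <= b ->
  (forall x y, a <= x -> x < y -> y <= b -> (forall z, x < z < y -> ~ In z l) -> P x y) ->
  P a b.
Proof.
  intros Hrefl Htrans. induction l as [|c l IH]; intros a b Hab H.
  - destruct (Req_dec a b) as [<-|Hne]; [apply Hrefl|].
    apply H; try lra. intros z _ [].
  - assert (Hl : forall a' b', a <= a' -> b' <= b -> a' <= b' ->
                 (a' < c < b' -> False) -> P a' b').
    { intros a' b' Ha' Hb' Hab' Hc. apply IH; [exact Hab'|].
      intros x y Hx Hxy Hy Hz. apply H; try lra.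
      intros z Hz' [<-|Hin]; [lra | exact (Hz z Hz' Hin)]. }
    destruct (Rlt_dec a c); [destruct (Rlt_dec c b)|].
    + apply Htrans with c; apply Hl; lra.
    + apply Hl; lra.
    + apply Hl; lra.
Qed.

Lemma is_RInt_derive_piece (phi G : R -> R) (a b : R) :
  a < b -> (forall x, continuous phi x) ->
  (forall x, a < x < b -> is_derive G x (phi x)) ->
  continuous_in G a b a -> continuous_in G a b b ->
  is_RInt phi a b (G b - G a).
Proof.
  intros Hab Hphi HG Ha Hb.
  assert (Hex : forall x y, ex_RInt phi x y)
    by (intros; apply (ex_RInt_continuous (V:=R_CompleteNormedModule)); auto).
  assert (HI : forall x, is_derive (fun x => RInt phi a x) x (phi x)).
  { intros x. apply (is_derive_RInt phi _ a); [|apply Hphi].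
    exists (mkposreal 1 Rlt_0_1). intros. apply (RInt_correct (V:=R_CompleteNormedModule)), Hex. }
  set (K := fun x => G (clamp a b x) - RInt phi a x).
  assert (HK : forall x, a < x < b -> is_derive K x 0).
  { intros x Hx. replace 0 with (phi x - phi x) by ring.
    apply (is_derive_minus (fun x => G (clamp a b x))); [|apply HI].
    apply (is_derive_ext_loc G); [|now apply HG].
    exists (mkposreal _ (Rmin_pos (x - a) (b - x) ltac:(lra) ltac:(lra))). simpl. intros y Hy.
    assert (Rmin (x - a) (b - x) <= x - a) by apply Rmin_l.
    assert (Rmin (x - a) (b - x) <= b - x) by apply Rmin_r.
    apply Rabs_lt_between' in Hy. rewrite clamp_id; lra. }
  assert (HKc : forall x, a <= x <= b -> continuity_pt K x).
  { intros x Hx. apply continuity_pt_filterlim. apply continuous_Rminus.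
    - apply continuous_comp_clamp; [lra|]. rewrite clamp_id by lra.
      destruct (Req_dec x a) as [->|]; [exact Ha|]. destruct (Req_dec x b) as [->|]; [exact Hb|].
      apply continuous_in_of_continuous, (ex_derive_continuous G).
      eexists. apply HG. lra.
    - apply (ex_derive_continuous (fun x => RInt phi a x)). eexists. apply HI. }
  destruct (MVT_gen K a b (fun _ => 0)) as [c [_ Hc]];
    rewrite ?Rmin_left, ?Rmax_right by lra; auto.
  unfold K in Hc. rewrite !clamp_id, RInt_point in Hc by lra.
  replace (G b - G a) with (RInt phi a b)
    by (unfold zero in Hc; simpl in Hc; lra).
  apply (RInt_correct (V:=R_CompleteNormedModule)), Hex.
Qed.

(** * Integral estimates and a chain rule *)

Lemma RInt_abs_bound (g : R -> R) (x y M : R) : ex_RInt g x y ->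
  (forall q, Rmin x y <= q <= Rmax x y -> Rabs (g q) <= M) ->
  Rabs (RInt g x y) <= Rabs (y - x) * M.
Proof.
  intros Hex H. destruct (Rle_dec x y) as [Hxy|Hxy].
  - rewrite (Rabs_right (y - x)) by lra. apply abs_RInt_le_const; auto.
    intros t Ht. apply H. rewrite Rmin_left, Rmax_right; lra.
  - rewrite <- (opp_RInt_swap (V:=R_CompleteNormedModule) g y x)
      by (apply (ex_RInt_swap (V:=R_NormedModule)); auto).
    unfold opp; simpl. rewrite Rabs_Ropp, (Rabs_left (y - x)) by lra.
    replace (- (y - x)) with (x - y) by ring.
    apply abs_RInt_le_const; [lra | apply (ex_RInt_swap (V:=R_NormedModule)); auto |].
    intros t Ht. apply H. rewrite Rmin_right, Rmax_left; lra.
Qed.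

Lemma RInt_deviation_bound (g : R -> R) (x y c e : R) : ex_RInt g x y ->
  (forall q, Rmin x y <= q <= Rmax x y -> Rabs (g q - c) <= e) ->
  Rabs (RInt g x y - (y - x) * c) <= Rabs (y - x) * e.
Proof.
  intros Hex H.
  assert (Hc : ex_RInt (fun _ => c) x y) by apply (ex_RInt_const (V:=R_NormedModule)).
  replace (RInt g x y - (y - x) * c) with (RInt (fun q => g q - c) x y).
  - apply RInt_abs_bound; [apply (ex_RInt_minus (V:=R_NormedModule) g (fun _ => c)) |]; auto.
  - rewrite (RInt_minus (V:=R_CompleteNormedModule) g (fun _ => c)), RInt_const; auto.
Qed.

Lemma is_RInt_gen_at_right_approx (f : R -> R) (q l : R) :
  is_RInt_gen f (at_right 0) (at_point q) l ->
  forall eps, 0 < eps -> exists d, 0 < d /\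
    forall a, 0 < a < d -> exists v, is_RInt f a q v /\ Rabs (v - l) < eps.
Proof.
  intros H eps Heps.
  destruct (H (fun v => Rabs (v - l) < eps)) as [Q P [d Hd] HP Hv].
  - exists (mkposreal eps Heps). intros y Hy. exact Hy.
  - exists d. split; [apply cond_pos|]. intros a Ha.
    destruct (Hv a q) as [v [Hv1 Hv2]]; [| apply HP | exists v; auto].
    apply Hd; [|lra]. apply Rabs_lt_between'. simpl. lra.
Qed.

Lemma IVT_local (p : R -> R) (r d s q : R) : 0 < d ->
  (forall t, Rabs (t - r) <= d -> continuous p t) -> Rabs (s - r) <= d ->
  Rmin (p r) (p s) <= q <= Rmax (p r) (p s) ->
  exists t, Rmin r s <= t <= Rmax r s /\ p t = q.
Proof.
  intros Hd Hc Hs Hq. apply Rabs_le_between' in Hs.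
  set (pc := fun y => p (clamp (r - d) (r + d) y)).
  assert (Hpc : forall y, continuous pc y).
  { intros y. apply continuous_comp_clamp; [lra|]. apply continuous_in_of_continuous, Hc.
    apply Rabs_le_between'. apply clamp_in. lra. }
  assert (Epc : forall y, r - d <= y <= r + d -> pc y = p y)
    by (intros; unfold pc; rewrite clamp_id; auto).
  destruct (IVT_gen_consistent pc r s q Hpc) as [t [Ht Hpt]].
  { rewrite !Epc by lra. exact Hq. }
  exists t. split; [exact Ht|]. rewrite <- Epc; [exact Hpt|].
  unfold Rmin, Rmax in Ht. destruct Rle_dec; lra.
Qed.

(** Caratheodory's form of the chain rule: an increment
    F(s) - F(r) = (p s - p r) (c + o(1)) is enough. *)
Lemma is_derive_of_increment (F p : R -> R) (r dp c : R) : is_derive p r dp ->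
  (forall e, 0 < e -> exists d, 0 < d /\ forall s, Rabs (s - r) < d ->
     Rabs (F s - F r - (p s - p r) * c) <= Rabs (p s - p r) * e) ->
  is_derive F r (dp * c).
Proof.
  intros Hp Hinc. apply is_derive_Reals. apply is_derive_Reals in Hp.
  intros eps Heps.
  assert (Hc : 0 <= Rabs c) by apply Rabs_pos. assert (Hdp : 0 <= Rabs dp) by apply Rabs_pos.
  set (e1 := Rmin 1 (eps / (2 * (Rabs c + 1)))).
  assert (He1 : 0 < e1) by (apply Rmin_pos; [lra | apply Rdiv_lt_0_compat; lra]).
  assert (He1_le1 : e1 <= 1) by apply Rmin_l.
  assert (He1_c : Rabs c * e1 < eps / 2).
  { apply Rle_lt_trans with (Rabs c * (eps / (2 * (Rabs c + 1)))).
    - apply Rmult_le_compat_l; [lra | apply Rmin_r].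
    - apply (Rmult_lt_reg_r (2 * (Rabs c + 1))); [lra|]. field_simplify; lra. }
  set (e2 := eps / (2 * (Rabs dp + 1))).
  assert (He2 : (Rabs dp + 1) * e2 = eps / 2) by (unfold e2; field; lra).
  destruct (Hp e1 He1) as [d1 Hd1].
  destruct (Hinc e2 ltac:(apply Rdiv_lt_0_compat; lra)) as [d2 [Hd2 Hinc2]].
  exists (mkposreal _ (Rmin_pos d1 d2 (cond_pos d1) Hd2)). simpl. intros h Hh0 Hh.
  assert (Rmin d1 d2 <= d1) by apply Rmin_l. assert (Rmin d1 d2 <= d2) by apply Rmin_r.
  specialize (Hd1 h Hh0 ltac:(lra)).
  specialize (Hinc2 (r + h) ltac:(replace (r + h - r) with h by ring; lra)).
  set (dq := (p (r + h) - p r) / h) in Hd1.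
  assert (Hdq : Rabs dq <= Rabs dp + 1) by (pose proof (Rabs_triang_inv dq dp); lra).
  assert (Hhpos : 0 < Rabs h) by (apply Rabs_pos_lt; exact Hh0).
  replace ((F (r + h) - F r) / h - dp * c)
    with ((F (r + h) - F r - (p (r + h) - p r) * c) / h + c * (dq - dp))
    by (unfold dq; field; exact Hh0).
  eapply Rle_lt_trans; [apply Rabs_triang|]. rewrite Rabs_div, Rabs_mult by exact Hh0.
  assert (A1 : Rabs (F (r + h) - F r - (p (r + h) - p r) * c) / Rabs h <= (Rabs dp + 1) * e2).
  { apply (Rmult_le_reg_r (Rabs h)); [exact Hhpos|].
    unfold Rdiv. rewrite Rmult_assoc, Rinv_l, Rmult_1_r by lra.
    eapply Rle_trans; [exact Hinc2|].
    replace (Rabs (p (r + h) - p r)) with (Rabs dq * Rabs h)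
      by (unfold dq; rewrite Rabs_div by exact Hh0; field; lra).
    replace ((Rabs dp + 1) * e2 * Rabs h) with ((Rabs dp + 1) * Rabs h * e2) by ring.
    apply Rmult_le_compat_r; [unfold e2; apply Rlt_le, Rdiv_lt_0_compat; lra | nra]. }
  assert (A3 : Rabs c * Rabs (dq - dp) < eps / 2).
  { apply Rle_lt_trans with (Rabs c * e1); [apply Rmult_le_compat_l|]; lra. }
  lra.
Qed.

Section PrimitiveAlongPath.

Variables (Phi g p : R -> R) (D : R -> Prop) (r d0 : R).
Hypothesis Phi_primitive : forall x y, D x -> D y -> ex_RInt g x y /\ Phi y - Phi x = RInt g x y.
Hypothesis d0_pos : 0 < d0.
Hypothesis p_near : forall s, Rabs (s - r) < d0 -> D (p s) /\ continuous p s.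
Hypothesis gp_continuous : continuous (fun s => g (p s)) r.

(** [g] itself need not be continuous at [p r], but every value between [p r] and
    [p s] is attained by [p] between [r] and [s]. *)
Lemma primitive_comp_increment (e : R) : 0 < e -> exists d, 0 < d /\
  forall s, Rabs (s - r) < d ->
    Rabs (Phi (p s) - Phi (p r) - (p s - p r) * g (p r)) <= Rabs (p s - p r) * e.
Proof.
  intros He.
  destruct (proj1 (continuous_eps_delta _ r) gp_continuous e He) as [d2 [Hd2 Hg]].
  exists (Rmin (d0 / 2) d2). split; [apply Rmin_pos; lra|]. intros s Hs.
  assert (Rmin (d0 / 2) d2 <= d0 / 2) by apply Rmin_l. assert (Rmin (d0 / 2) d2 <= d2) by apply Rmin_r.
  assert (Dr : D (p r)) by (apply p_near; rewrite Rminus_eq_0, Rabs_R0; lra).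
  assert (Ds : D (p s)) by (apply p_near; lra).
  destruct (Phi_primitive (p r) (p s) Dr Ds) as [Hex ->].
  apply RInt_deviation_bound; [exact Hex|]. intros q Hq.
  destruct (IVT_local p r (d0 / 2) s q) as [t [Ht <-]]; try lra.
  - intros t Ht. apply p_near. lra.
  - apply Rlt_le, Hg. apply Rabs_lt_between' in Hs. apply Rabs_lt_between'.
    unfold Rmin, Rmax in Ht. destruct Rle_dec; lra.
Qed.

Lemma is_derive_comp_primitive (dp : R) :
  is_derive p r dp -> is_derive (fun s => Phi (p s)) r (dp * g (p r)).
Proof.
  intros Hp. apply (is_derive_of_increment (fun s => Phi (p s)) p r dp (g (p r)) Hp).
  exact primitive_comp_increment.
Qed.

End PrimitiveAlongPath.

(** * Behaviour at infinity *)

Lemma is_RInt_gen_of_partial (f I : R -> R) (l B1 : R) :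
  (forall b, B1 < b -> is_RInt f 0 b (I b)) ->
  (forall eps, 0 < eps -> exists B, forall b, B < b -> Rabs (I b - l) < eps) ->
  is_RInt_gen f (at_point 0) (Rbar_locally p_infty) l.
Proof.
  intros HI Hlim P [eps Heps].
  destruct (Hlim eps (cond_pos eps)) as [B HB].
  apply (Filter_prod _ _ _ (fun a => a = 0) (fun b => Rmax B B1 < b)).
  - reflexivity.
  - exists (Rmax B B1). auto.
  - intros a b -> Hb. simpl. pose proof (Rmax_l B B1). pose proof (Rmax_r B B1).
    exists (I b). split; [apply HI; lra|]. apply Heps, HB. lra.
Qed.

Lemma Rpower_unbounded (x K : R) : 0 < x -> exists B, 1 <= B /\ forall r, B < r -> K < Rpower r x.
Proof.
  intros Hx. exists (Rmax 1 (exp (K / x))). split; [apply Rmax_l|]. intros r Hr.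
  pose proof (Rmax_l 1 (exp (K / x))). pose proof (Rmax_r 1 (exp (K / x))).
  unfold Rpower. pose proof (exp_ineq1_le (x * ln r)).
  assert (K / x < ln r) by (rewrite <- (ln_exp (K / x)); apply ln_increasing; [apply exp_pos | lra]).
  assert (K < x * ln r).
  { replace K with (x * (K / x)) by (field; lra). apply Rmult_lt_compat_l; assumption. }
  lra.
Qed.

Lemma Oinf_bound (f : R -> R) (k : R) : Oinf f k ->
  exists R0 C, 0 < R0 /\ forall r, R0 < r -> Rabs (f r) <= C / Rpower r k.
Proof.
  intros [R0 [HR0 [_ HC]]]. destruct (HC 0%nat) as [C HC0]. exists R0, C. split; [exact HR0|].
  intros r Hr. specialize (HC0 r Hr). simpl in HC0.
  rewrite Rplus_0_r, Rpower_Ropp in HC0. exact HC0.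
Qed.

Lemma Oinf_1_bound (f : R -> R) : Oinf f 1 ->
  exists R0 C, 0 < R0 /\ 0 <= C /\ forall r, R0 < r ->
    Rabs (f r) <= C / r /\ Rabs (Derive f r) <= C / r ^ 2.
Proof.
  intros [R0 [HR0 [_ HC]]]. destruct (HC 0%nat) as [C0 HC0]. destruct (HC 1%nat) as [C1 HC1].
  set (C := Rmax 0 (Rmax C0 C1)).
  assert (C0 <= C /\ C1 <= C) as [HC0C HC1C].
  { unfold C. pose proof (Rmax_r 0 (Rmax C0 C1)).
    pose proof (Rmax_l C0 C1). pose proof (Rmax_r C0 C1). lra. }
  exists R0, C. split; [exact HR0|]. split; [apply Rmax_l|]. intros r Hr.
  specialize (HC0 r Hr). specialize (HC1 r Hr). simpl in HC0, HC1.
  rewrite Rplus_0_r, Rpower_Ropp, Rpower_1 in HC0 by lra.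
  rewrite Rpower_Ropp, Rpower_plus, Rpower_1 in HC1 by lra.
  assert (0 < / r) by (apply Rinv_0_lt_compat; lra).
  assert (0 < / r ^ 2) by (apply Rinv_0_lt_compat, pow_lt; lra).
  split.
  - eapply Rle_trans; [exact HC0|]. apply Rmult_le_compat_r; lra.
  - eapply Rle_trans; [exact HC1|]. replace (r * r) with (r ^ 2) by ring.
    apply Rmult_le_compat_r; lra.
Qed.

Lemma list_gap_right (l : list R) (r : R) :
  exists d, 0 < d /\ forall z, r < z < r + d -> ~ In z l.
Proof.
  induction l as [|c l [d [Hd H]]].
  - exists 1. split; [lra|]. intros z _ [].
  - destruct (Rlt_dec r c).
    + exists (Rmin d (c - r)). split; [apply Rmin_pos; lra|].
      pose proof (Rmin_l d (c - r)). pose proof (Rmin_r d (c - r)).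
      intros z Hz [<-|Hin]; [lra | apply (H z); [lra | exact Hin]].
    + exists d. split; [exact Hd|]. intros z Hz [<-|Hin]; [lra | exact (H z Hz Hin)].
Qed.

Lemma continuous_le_of_le_right (g B : R -> R) (r d0 : R) (l : list R) :
  0 < d0 -> continuous g r -> continuous B r ->
  (forall s, r < s < r + d0 -> ~ In s l -> g s <= B s) -> g r <= B r.
Proof.
  intros Hd0 Hg HB H. apply Rnot_lt_le. intros Hlt.
  destruct (list_gap_right l r) as [d1 [Hd1 Hgap]].
  destruct (continuous_pos_near (fun s => g s - B s) r (continuous_Rminus g B r Hg HB))
    as [d2 [Hd2 H2]]; [lra|].
  set (m := Rmin d0 (Rmin d1 d2)).
  assert (m <= d0) by apply Rmin_l. assert (m <= Rmin d1 d2) by apply Rmin_r.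
  assert (Rmin d1 d2 <= d1) by apply Rmin_l. assert (Rmin d1 d2 <= d2) by apply Rmin_r.
  assert (0 < m) by (unfold m; repeat apply Rmin_pos; lra).
  specialize (H (r + m / 2) ltac:(lra) (Hgap (r + m / 2) ltac:(lra))).
  specialize (H2 (r + m / 2)). simpl in H2.
  assert (Rabs (r + m / 2 - r) < d2)
    by (replace (r + m / 2 - r) with (m / 2) by ring; rewrite Rabs_right; lra).
  specialize (H2 ltac:(assumption)). lra.
Qed.

Lemma Oinf_eventually_const (f : R -> R) (k c R1 : R) : 0 < k -> Oinf f k ->
  (forall r, R1 <= r -> f r = c) -> c = 0.
Proof.
  intros Hk Hf Hc. destruct (Oinf_bound f k Hf) as [R0 [C [_ HR]]].
  destruct (Req_dec c 0) as [E|Hne]; [exact E|]. exfalso.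
  assert (Ha : 0 < Rabs c) by (apply Rabs_pos_lt; exact Hne).
  destruct (Rpower_unbounded k ((Rabs C + 1) / Rabs c) Hk) as [B [_ HB]].
  set (r := Rmax (Rmax R0 R1) B + 1).
  pose proof (Rmax_l (Rmax R0 R1) B). pose proof (Rmax_r (Rmax R0 R1) B).
  pose proof (Rmax_l R0 R1). pose proof (Rmax_r R0 R1).
  specialize (HR r ltac:(unfold r; lra)). rewrite (Hc r) in HR by (unfold r; lra).
  specialize (HB r ltac:(unfold r; lra)).
  assert (Hp : 0 < Rpower r k) by apply exp_pos.
  assert (Rabs c * Rpower r k <= Rabs C).
  { apply (Rmult_le_compat_r (Rpower r k)) in HR; [|lra].
    unfold Rdiv in HR. rewrite Rmult_assoc, Rinv_l, Rmult_1_r in HR by lra.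
    pose proof (Rle_abs C). lra. }
  apply (Rmult_lt_compat_l (Rabs c)) in HB; [|exact Ha].
  replace (Rabs c * ((Rabs C + 1) / Rabs c)) with (Rabs C + 1) in HB by (field; lra).
  lra.
Qed.

(** * The equation of state *)

Definition dGam (rho : R -> R) (q : R) : R := / (rho q + q).

(** [Gam rho 0] is unspecified: [dGam] may be unbounded at 0, where no Riemann
    integral is available.  [Gam_ext] sets Gamma(0) = 0. *)
Definition Gam_ext (rho : R -> R) (q : R) : R := if Rlt_dec 0 q then Gam rho q else 0.

(** With e = exp(-Gamma) and a = rho / (rho + q), the integrand of J0 is
    [kernel_form e a]; both e and a lie in [0,1]. *)
Definition kernel_form (e a : R) : R := e * ((1 + e) * a + 6 * e * (1 - a)).

Definition J0_kernel (rho : R -> R) (q : R) : R := exp (- Gam rho q) * / (rho q + q) * H0 rho q.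

Definition J0_integral (rho : R -> R) (y : R) : R := RInt (J0_kernel rho) 0 y.

Lemma kernel_form_bound (e a : R) : 0 < e <= 1 -> 0 <= a <= 1 -> 0 <= kernel_form e a <= 8.
Proof. intros. unfold kernel_form. split; nra. Qed.

Lemma continuous_kernel_form (u v : R -> R) (x : R) :
  continuous u x -> continuous v x -> continuous (fun z => kernel_form (u z) (v z)) x.
Proof. intros Hu Hv. unfold kernel_form. continuity_R. Qed.

Lemma exp_opp_nonneg_bound (x : R) : 0 <= x -> 0 < exp (- x) <= 1.
Proof.
  intros. split; [apply exp_pos|]. rewrite <- exp_0.
  destruct (Req_dec x 0) as [->|]; [rewrite Ropp_0; lra|].
  left. apply exp_increasing. lra.
Qed.

Section EquationOfState.

Variables (rho : R -> R) (pmax : R).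
Hypothesis Heos : eos rho pmax.

Lemma pmax_pos : 0 < pmax.
Proof. apply Heos. Qed.

Lemma rho_pos (q : R) : 0 < q <= pmax -> 0 < rho q.
Proof. apply Heos. Qed.

Lemma dGam_pos (q : R) : 0 < q <= pmax -> 0 < dGam rho q.
Proof. intros Hq. unfold dGam. pose proof (rho_pos q Hq). apply Rinv_0_lt_compat. lra. Qed.

Lemma dGam_bound (x0 q : R) : 0 < x0 -> x0 <= q <= pmax -> Rabs (dGam rho q) <= / x0.
Proof.
  intros Hx0 Hq. rewrite Rabs_right by (apply Rle_ge, Rlt_le, dGam_pos; lra).
  unfold dGam. pose proof (rho_pos q ltac:(lra)). apply Rinv_le_contravar; lra.
Qed.

Lemma Gam_correct (q : R) : 0 < q <= pmax ->
  is_RInt_gen (dGam rho) (at_right 0) (at_point q) (Gam rho q).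
Proof.
  intros Hq. destruct Heos as [_ [_ [_ [H _]]]].
  apply (RInt_gen_correct (V:=R_CompleteNormedModule)), H, Hq.
Qed.

Lemma ex_RInt_dGam (x y : R) : 0 < x <= pmax -> 0 < y <= pmax -> ex_RInt (dGam rho) x y.
Proof.
  assert (Hle : forall a b, 0 < a <= b -> b <= pmax -> ex_RInt (dGam rho) a b).
  { intros a b Hab Hb.
    destruct (is_RInt_gen_at_right_approx _ b _ (Gam_correct b ltac:(lra)) 1 Rlt_0_1)
      as [d [Hd H]].
    assert (Rmin (d / 2) (a / 2) <= d / 2) by apply Rmin_l.
    assert (Rmin (d / 2) (a / 2) <= a / 2) by apply Rmin_r.
    destruct (H (Rmin (d / 2) (a / 2))) as [v [Hv _]]; [split; [apply Rmin_pos|]; lra|].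
    apply (ex_RInt_Chasles_2 (V:=R_CompleteNormedModule) _ (Rmin (d / 2) (a / 2))); [lra|].
    exists v. exact Hv. }
  intros Hx Hy. destruct (Rle_dec x y).
  - apply Hle; lra.
  - apply (ex_RInt_swap (V:=R_NormedModule)), Hle; lra.
Qed.

Lemma Gam_sub (x y : R) : 0 < x <= pmax -> 0 < y <= pmax ->
  Gam rho y - Gam rho x = RInt (dGam rho) x y.
Proof.
  intros Hx Hy.
  assert (H : is_RInt_gen (dGam rho) (at_right 0) (at_point y)
                (plus (Gam rho x) (RInt (dGam rho) x y))).
  { apply (is_RInt_gen_Chasles (dGam rho) x); [now apply Gam_correct|].
    apply is_RInt_gen_at_point, (RInt_correct (V:=R_CompleteNormedModule)), ex_RInt_dGam; auto. }
  apply (is_RInt_gen_unique (V:=R_CompleteNormedModule)) in H.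
  change (RInt_gen (dGam rho) (at_right 0) (at_point y) - Gam rho x = RInt (dGam rho) x y).
  rewrite H. unfold plus. simpl. ring.
Qed.

Lemma Gam_lim_right_0 : lim_right (Gam rho) 0 0.
Proof.
  pose proof pmax_pos as Hpmax. intros eps Heps.
  destruct (is_RInt_gen_at_right_approx _ pmax _ (Gam_correct pmax ltac:(lra)) eps Heps)
    as [d [Hd H]].
  exists (Rmin d pmax). split; [apply Rmin_pos; lra|]. intros a Ha.
  assert (Rmin d pmax <= d) by apply Rmin_l. assert (Rmin d pmax <= pmax) by apply Rmin_r.
  destruct (H a ltac:(lra)) as [v [Hv1 Hv2]].
  apply (is_RInt_unique (V:=R_CompleteNormedModule)) in Hv1.
  rewrite <- Hv1, <- Gam_sub in Hv2 by lra.
  rewrite Rminus_0_r. replace (Gam rho a) with (- (Gam rho pmax - Gam rho a - Gam rho pmax)) by ring.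
  rewrite Rabs_Ropp. exact Hv2.
Qed.

Lemma Gam_nonneg (q : R) : 0 < q <= pmax -> 0 <= Gam rho q.
Proof.
  intros Hq. apply Rnot_lt_le. intros Hneg.
  destruct (Gam_lim_right_0 (- Gam rho q) ltac:(lra)) as [d [Hd H]].
  set (a := Rmin (d / 2) (q / 2)).
  assert (a <= d / 2) by apply Rmin_l. assert (a <= q / 2) by apply Rmin_r.
  assert (0 < a) by (apply Rmin_pos; lra).
  specialize (H a ltac:(lra)). rewrite Rminus_0_r in H. apply Rabs_lt_between in H.
  assert (HR : 0 <= RInt (dGam rho) a q).
  { apply RInt_ge_0; [lra | apply ex_RInt_dGam; lra |].
    intros x Hx. apply Rlt_le, dGam_pos. lra. }
  rewrite <- Gam_sub in HR by lra. lra.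
Qed.

Lemma Gam_ext_pos (q : R) : 0 < q -> Gam_ext rho q = Gam rho q.
Proof. intros. unfold Gam_ext. destruct Rlt_dec; [reflexivity | lra]. Qed.

Lemma Gam_ext_0 : Gam_ext rho 0 = 0.
Proof. unfold Gam_ext. destruct Rlt_dec; [lra | reflexivity]. Qed.

Lemma Gam_ext_nonneg (q : R) : q <= pmax -> 0 <= Gam_ext rho q.
Proof. intros. unfold Gam_ext. destruct Rlt_dec; [apply Gam_nonneg | ]; lra. Qed.

Lemma Gam_ext_sub (x y : R) : 0 < x <= pmax -> 0 < y <= pmax ->
  ex_RInt (dGam rho) x y /\ Gam_ext rho y - Gam_ext rho x = RInt (dGam rho) x y.
Proof.
  intros. split; [now apply ex_RInt_dGam|]. rewrite !Gam_ext_pos by lra. now apply Gam_sub.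
Qed.

Lemma Gam_ext_continuous_in (x : R) : 0 <= x <= pmax -> continuous_in (Gam_ext rho) 0 pmax x.
Proof.
  intros Hx eps Heps. destruct (Req_dec x 0) as [->|Hx0].
  - destruct (Gam_lim_right_0 eps Heps) as [d [Hd H]]. exists d. split; [exact Hd|].
    intros y Hy1 Hy2. rewrite Gam_ext_0, Rminus_0_r.
    destruct (Req_dec y 0) as [->|]; [rewrite Gam_ext_0, Rabs_R0; exact Heps|].
    rewrite Gam_ext_pos by lra. rewrite Rminus_0_r in Hy2.
    specialize (H y). rewrite Rminus_0_r in H. apply H.
    apply Rabs_lt_between in Hy2. lra.
  - exists (Rmin (x / 2) (eps * x / 2)). split.
    { apply Rmin_pos; [lra|]. apply Rmult_lt_0_compat; [apply Rmult_lt_0_compat|]; lra. }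
    intros y Hy1 Hy2.
    assert (Rmin (x / 2) (eps * x / 2) <= x / 2) by apply Rmin_l.
    assert (Rmin (x / 2) (eps * x / 2) <= eps * x / 2) by apply Rmin_r.
    apply Rabs_lt_between' in Hy2 as Hy3.
    destruct (Gam_ext_sub x y ltac:(lra) ltac:(lra)) as [Hex ->].
    eapply Rle_lt_trans; [apply (RInt_abs_bound _ x y (/ (x / 2))); [exact Hex|]|].
    + intros q Hq. apply dGam_bound; [lra|]. unfold Rmin, Rmax in Hq. destruct Rle_dec; lra.
    + apply (Rmult_lt_reg_r (x / 2)); [lra|]. rewrite Rmult_assoc, Rinv_l, Rmult_1_r by lra.
      replace (eps * (x / 2)) with (eps * x / 2) by field. lra.
Qed.

Lemma continuous_exp_Gam_ext_clamp (x y z : R) : 0 <= x -> x < y -> y <= pmax ->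
  continuous (fun z => exp (- Gam_ext rho (clamp x y z))) z.
Proof.
  intros. apply continuous_exp_comp, continuous_Ropp, continuous_comp_clamp; [lra|].
  apply (continuous_in_subinterval _ 0 pmax); try lra.
  apply Gam_ext_continuous_in. pose proof (clamp_in x y z). lra.
Qed.

Lemma J0_kernel_form (q : R) : 0 < q <= pmax ->
  J0_kernel rho q = kernel_form (exp (- Gam_ext rho q)) (rho q / (rho q + q)).
Proof.
  intros Hq. pose proof (rho_pos q Hq).
  unfold J0_kernel, kernel_form, H0. rewrite Gam_ext_pos by lra. field. lra.
Qed.

Lemma J0_kernel_bound (q : R) : 0 < q <= pmax -> Rabs (J0_kernel rho q) <= 8.
Proof.
  intros Hq. pose proof (rho_pos q Hq).
  assert (Ha : 0 <= rho q / (rho q + q) <= 1).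
  { split; [apply Rlt_le, Rdiv_lt_0_compat; lra|].
    apply (Rmult_le_reg_r (rho q + q)); [lra|]. field_simplify; lra. }
  assert (He : 0 < exp (- Gam_ext rho q) <= 1) by (apply exp_opp_nonneg_bound, Gam_ext_nonneg; lra).
  rewrite J0_kernel_form by exact Hq. apply Rabs_le_between.
  pose proof (kernel_form_bound _ _ He Ha). lra.
Qed.

Lemma rho_continuous_at (l : list R) (z : R) :
  (forall z, 0 <= z <= pmax -> ~ In z l ->
     filterlim rho (within (fun y => 0 <= y <= pmax) (locally z)) (locally (rho z))) ->
  0 < z < pmax -> ~ In z l -> continuous rho z.
Proof.
  intros Hc Hz Hzl. apply (continuous_of_continuous_in rho 0 pmax); [exact Hz|].
  apply continuous_in_filterlim, Hc; [lra | exact Hzl].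
Qed.

Lemma ex_RInt_J0_kernel_piece (l : list R) (x y : R) :
  (forall z, 0 <= z <= pmax -> ~ In z l ->
     filterlim rho (within (fun y => 0 <= y <= pmax) (locally z)) (locally (rho z))) ->
  (forall z, 0 < z <= pmax -> exists L, filterlim rho (at_left z) (locally L)) ->
  (forall z, 0 <= z < pmax -> exists L, filterlim rho (at_right z) (locally L)) ->
  0 < x -> x < y -> y <= pmax -> (forall z, x < z < y -> ~ In z l) ->
  ex_RInt (J0_kernel rho) x y.
Proof.
  intros Hc Hl Hr Hx Hxy Hy Hz.
  destruct (continuous_nonneg_extension rho x y Hxy) as [phi [Hphi [Hphi0 Heq]]].
  - intros z Hz'. apply (rho_continuous_at l); [exact Hc | lra | auto].
  - intros z Hz'. apply Rlt_le, rho_pos. lra.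
  - destruct (Hr x ltac:(lra)) as [L HL]. exists L. now apply lim_right_filterlim.
  - destruct (Hl y ltac:(lra)) as [L HL]. exists L. now apply lim_left_filterlim.
  - apply (ex_RInt_ext (V:=R_NormedModule)
      (fun z => kernel_form (exp (- Gam_ext rho (clamp x y z))) (phi z / (phi z + clamp x y z)))).
    + intros z Hz'. rewrite Rmin_left, Rmax_right in Hz' by lra.
      rewrite clamp_id, Heq, J0_kernel_form by lra. reflexivity.
    + apply (ex_RInt_continuous (V:=R_CompleteNormedModule)). intros z _.
      apply continuous_kernel_form; [apply continuous_exp_Gam_ext_clamp; lra|].
      pose proof (clamp_in x y z). pose proof (Hphi0 z).
      apply continuous_Rdiv; [apply Hphi | apply continuous_Rplus; [apply Hphi | apply continuous_clamp] | lra].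
Qed.

(** Near 0 the kernel is written with a = 1 / (1 + q / rho), which stays continuous
    at 0 because q / rho has a limit there. *)
Lemma ex_RInt_J0_kernel_at_0 (l : list R) (m : R) :
  (forall z, 0 <= z <= pmax -> ~ In z l ->
     filterlim rho (within (fun y => 0 <= y <= pmax) (locally z)) (locally (rho z))) ->
  0 < m < pmax -> (forall z, 0 < z <= m -> ~ In z l) -> ex_RInt (J0_kernel rho) 0 m.
Proof.
  intros Hc Hm Hz.
  set (w := fun q => / rho q * q).
  assert (Hcw : forall z, 0 < z <= m -> continuous w z).
  { intros z Hz'. pose proof (rho_pos z ltac:(lra)).
    apply continuous_Rmult; [|apply continuous_id].
    apply continuous_Rinv_comp; [|lra]. apply (rho_continuous_at l); [exact Hc | lra | auto]. }
  destruct (continuous_nonneg_extension w 0 m) as [phi [Hphi [Hphi0 Heq]]]; [lra | | | | |].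
  - intros z Hz'. apply Hcw. lra.
  - intros z Hz'. pose proof (rho_pos z ltac:(lra)). unfold w.
    apply Rlt_le, Rmult_lt_0_compat; [apply Rinv_0_lt_compat|]; lra.
  - destruct Heos as [_ [_ [_ [_ [L HL]]]]]. exists L. now apply lim_right_filterlim.
  - exists (w m). intros eps Heps.
    destruct (proj1 (continuous_eps_delta w m) (Hcw m ltac:(lra)) eps Heps) as [d [Hd H]].
    exists d. split; [exact Hd|]. intros y Hy. apply H, Rabs_lt_between'. lra.
  - apply (ex_RInt_ext (V:=R_NormedModule)
      (fun z => kernel_form (exp (- Gam_ext rho (clamp 0 m z))) (1 / (1 + phi z)))).
    + intros z Hz'. rewrite Rmin_left, Rmax_right in Hz' by lra.
      rewrite clamp_id, Heq, J0_kernel_form by lra. f_equal.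
      unfold w. pose proof (rho_pos z ltac:(lra)). field. lra.
    + apply (ex_RInt_continuous (V:=R_CompleteNormedModule)). intros z _.
      apply continuous_kernel_form; [apply continuous_exp_Gam_ext_clamp; lra|].
      pose proof (Hphi0 z).
      apply continuous_Rdiv; [apply continuous_const | apply continuous_Rplus; [apply continuous_const | apply Hphi] | lra].
Qed.

Lemma ex_RInt_J0_kernel (x y : R) : 0 <= x <= pmax -> 0 <= y <= pmax ->
  ex_RInt (J0_kernel rho) x y.
Proof.
  assert (H0y : forall y, 0 <= y <= pmax -> ex_RInt (J0_kernel rho) 0 y).
  { intros y0 Hy0. destruct Heos as [Hp [[l [Hc [Hl Hr]]] _]].
    apply (interval_prop_of_pieces (ex_RInt (J0_kernel rho)) l); [| | lra |].
    - intros z. apply (ex_RInt_point (V:=R_NormedModule)).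
    - intros u v w. apply (ex_RInt_Chasles (V:=R_CompleteNormedModule)).
    - intros a b Ha Hab Hb Hz. destruct (Rlt_dec 0 a).
      + apply (ex_RInt_J0_kernel_piece l); auto; lra.
      + replace a with 0 by lra.
        apply (ex_RInt_Chasles (V:=R_CompleteNormedModule) _ 0 (b / 2) b).
        * apply (ex_RInt_J0_kernel_at_0 l); auto; [lra|]. intros z Hz'. apply Hz. lra.
        * apply (ex_RInt_J0_kernel_piece l); auto; try lra. intros z Hz'. apply Hz. lra. }
  assert (Hle : forall a b, 0 <= a <= b -> b <= pmax -> ex_RInt (J0_kernel rho) a b).
  { intros a b Hab Hb. apply (ex_RInt_Chasles_2 (V:=R_CompleteNormedModule) _ 0); [lra|].
    apply H0y. lra. }
  intros Hx Hy. destruct (Rle_dec x y).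
  - apply Hle; lra.
  - apply (ex_RInt_swap (V:=R_NormedModule)), Hle; lra.
Qed.

Lemma J0_integral_sub (x y : R) : 0 <= x <= pmax -> 0 <= y <= pmax ->
  ex_RInt (J0_kernel rho) x y /\
  J0_integral rho y - J0_integral rho x = RInt (J0_kernel rho) x y.
Proof.
  intros Hx Hy. split; [now apply ex_RInt_J0_kernel|].
  unfold J0_integral. rewrite <- (RInt_Chasles (V:=R_CompleteNormedModule) _ 0 x y)
    by (apply ex_RInt_J0_kernel; lra).
  unfold plus. simpl. ring.
Qed.

Lemma RInt_J0_kernel_bound (x y : R) : 0 <= x <= pmax -> 0 <= y <= pmax ->
  Rabs (RInt (J0_kernel rho) x y) <= Rabs (y - x) * 8.
Proof.
  intros Hx Hy.
  set (k := fun q => if Rlt_dec 0 q then J0_kernel rho q else 0).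
  rewrite (RInt_ext (V:=R_CompleteNormedModule) _ k).
  - apply RInt_abs_bound.
    + apply (ex_RInt_ext (V:=R_NormedModule) (J0_kernel rho)); [|now apply ex_RInt_J0_kernel].
      intros q Hq. unfold k. destruct Rlt_dec; [reflexivity|].
      exfalso. unfold Rmin, Rmax in Hq. destruct Rle_dec; lra.
    + intros q Hq. unfold k. destruct Rlt_dec.
      * apply J0_kernel_bound. unfold Rmin, Rmax in Hq. destruct Rle_dec; lra.
      * rewrite Rabs_R0. lra.
  - intros q Hq. unfold k. destruct Rlt_dec; [reflexivity|].
    exfalso. unfold Rmin, Rmax in Hq. destruct Rle_dec; lra.
Qed.

Lemma J0_integral_continuous_in (x : R) : 0 <= x <= pmax ->
  continuous_in (J0_integral rho) 0 pmax x.
Proof.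
  intros Hx eps Heps. exists (eps / 9). split; [lra|]. intros y Hy Hxy.
  destruct (J0_integral_sub x y Hx Hy) as [_ ->].
  eapply Rle_lt_trans; [apply RInt_J0_kernel_bound; auto | lra].
Qed.

Lemma J0_integral_0 : J0_integral rho 0 = 0.
Proof. unfold J0_integral. now rewrite RInt_point. Qed.

Lemma J0_integral_bound (y : R) : 0 <= y <= pmax -> Rabs (J0_integral rho y) <= 8 * y.
Proof.
  intros Hy. eapply Rle_trans; [apply RInt_J0_kernel_bound; lra|].
  rewrite Rminus_0_r, Rabs_right by lra. lra.
Qed.

End EquationOfState.

(** * The antiderivative *)

(** [s * (1 - / h s) / 2] is the mass function m(s), so the first term is
    u^2 s (m/s + 4 pi s^2 p)^2 h. *)
Definition antiderivative (u h p I : R -> R) (s : R) : R :=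
  u s ^ 2 * s * ((1 - / h s) / 2 + 4 * PI * s ^ 2 * p s) ^ 2 * h s
  - (1 - u s ^ 2) * (s * (1 - / h s) / 2) / 2
  + (u s ^ 2 - u s) * (4 * PI * s ^ 3 * p s) + 4 * PI * s ^ 3 * I s.

Lemma field_eqs_first_order (r H dh rh P V1 V2 Vr : R) : 0 < r -> 0 < H -> 0 < Vr ->
  / H * (V2 - dh * V1 / (2 * H) + 2 * V1 / r) = 4 * PI * (rh + 3 * P) * Vr ->
  dh / (r * H) = / Vr * (V2 - dh * V1 / (2 * H)) + 4 * PI * (rh - P) * H ->
  1 - / H + r * dh / (2 * H ^ 2) = / Vr * (r * V1 / H) + 4 * PI * (rh - P) * r ^ 2 ->
  V1 / Vr = 4 * PI * (rh + P) * H * r - dh / (2 * H) /\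
  r * dh / H ^ 2 = 8 * PI * rh * r ^ 2 - 1 + / H.
Proof.
  intros Hr HH HV Lap RR TT.
  assert (EV2 : V2 - dh * V1 / (2 * H) = 4 * PI * (rh + 3 * P) * Vr * H - 2 * V1 / r)
    by (rewrite <- Lap; field; lra).
  assert (EV1 : V1 / Vr = 4 * PI * (rh + P) * H * r - dh / (2 * H)).
  { replace (dh / (2 * H)) with (r / 2 * (dh / (r * H))) by (field; lra).
    rewrite RR, EV2. field. lra. }
  split; [exact EV1|].
  replace (/ Vr * (r * V1 / H)) with (r / H * (V1 / Vr)) in TT by (field; lra).
  rewrite EV1 in TT.
  replace (r * dh / (2 * H ^ 2)) with ((r * dh / H ^ 2) / 2) in TT by (field; lra).
  replace (r / H * (4 * PI * (rh + P) * H * r - dh / (2 * H))) with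
    (4 * PI * (rh + P) * r ^ 2 - (r * dh / H ^ 2) / 2) in TT by (field; lra).
  lra.
Qed.

Lemma is_derive_antiderivative (u h p I : R -> R) (r du dh dp dI rh N : R) :
  0 < r -> 0 < h r -> 0 < rh -> 0 <= p r ->
  is_derive u r du -> is_derive h r dh -> is_derive p r dp -> is_derive I r dI ->
  r * dh / h r ^ 2 = 8 * PI * rh * r ^ 2 - 1 + / h r ->
  N = 4 * PI * (rh + p r) * h r * r - dh / (2 * h r) ->
  dp = - (rh + p r) * N ->
  du = u r * (- (dp * / (rh + p r))) ->
  dI = dp * (u r * / (rh + p r) * (rh + rh * u r + 6 * p r * u r)) ->
  is_derive (antiderivative u h p I) r
    (4 * PI * r ^ 2 * (- (rh * (/ (2 * rh) * (1 - u r) * (rh + rh * u r + 6 * p r * u r)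
       - 3 * / rh * I r)))).
Proof.
  intros Hr Hh Hrh Hp Hu Hhd Hpd HI Eh EN Ep Eu EI.
  unfold antiderivative. auto_derive.
  - repeat split; try (eexists; eassumption); lra.
  - replace (Derive (fun x => u x) r) with du by (symmetry; now apply is_derive_unique).
    replace (Derive (fun x => h x) r) with dh by (symmetry; now apply is_derive_unique).
    replace (Derive (fun x => p x) r) with dp by (symmetry; now apply is_derive_unique).
    replace (Derive (fun x => I x) r) with dI by (symmetry; now apply is_derive_unique).
    assert (Edh : dh = (8 * PI * rh * r ^ 2 - 1 + / h r) * h r ^ 2 / r)
      by (rewrite <- Eh; field; lra).
    subst dI du dp N. rewrite Edh. field. repeat split; lra.
Qed.

(** With X = m(r) and Y = 4 pi r^3 p, [antiderivative] at r is the expression bounded here. *)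
Lemma antiderivative_bound (u X Y h r T C : R) : 0 < r -> 0 < u <= 1 -> Rabs X <= C ->
  0 <= Y <= 1 -> 0 < h <= 2 -> Rabs T <= 8 * Y ->
  Rabs (u ^ 2 * (X + Y) ^ 2 * h / r - (1 - u ^ 2) * X / 2 + (u ^ 2 - u) * Y + T)
    <= 2 * (C + 1) ^ 2 / r + (1 - u) * C + 9 * Y.
Proof.
  intros Hr Hu HX HY Hh HT.
  apply Rabs_le_between in HX as HX'. apply Rabs_le_between in HT.
  assert (A : 0 <= u ^ 2 * (X + Y) ^ 2 * h / r <= 2 * (C + 1) ^ 2 / r).
  { assert (E1 : (X + Y) ^ 2 <= (C + 1) ^ 2).
    { assert (F1 : 0 <= C + 1 - (X + Y)) by lra. assert (F2 : 0 <= C + 1 + (X + Y)) by lra.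
      pose proof (Rmult_le_pos _ _ F1 F2). nra. }
    assert (E0 : 0 <= u ^ 2) by apply pow2_ge_0.
    assert (E3 : 0 <= (X + Y) ^ 2) by apply pow2_ge_0.
    assert (E4 : u ^ 2 <= 1) by nra.
    assert (E5 : u ^ 2 * (X + Y) ^ 2 <= (C + 1) ^ 2).
    { apply Rle_trans with (1 * (X + Y) ^ 2); [apply Rmult_le_compat_r|]; lra. }
    assert (E6 : 0 <= u ^ 2 * (X + Y) ^ 2) by (apply Rmult_le_pos; lra).
    assert (E2 : u ^ 2 * (X + Y) ^ 2 * h <= 2 * (C + 1) ^ 2).
    { apply Rle_trans with (u ^ 2 * (X + Y) ^ 2 * 2); [apply Rmult_le_compat_l|]; lra. }
    assert (0 <= u ^ 2 * (X + Y) ^ 2 * h) by (apply Rmult_le_pos; lra).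
    assert (0 < / r) by (apply Rinv_0_lt_compat; lra).
    unfold Rdiv. split; [apply Rmult_le_pos; lra | apply Rmult_le_compat_r; lra]. }
  assert (B : Rabs ((1 - u ^ 2) * X / 2) <= (1 - u) * C).
  { replace ((1 - u ^ 2) * X / 2) with ((1 - u) * ((1 + u) / 2 * X)) by field.
    rewrite Rabs_mult, (Rabs_right (1 - u)) by lra. apply Rmult_le_compat_l; [lra|].
    rewrite Rabs_mult, (Rabs_right ((1 + u) / 2)) by lra.
    apply Rle_trans with (1 * Rabs X); [apply Rmult_le_compat_r; [apply Rabs_pos | lra] | lra]. }
  assert (Cc : 0 <= (u - u ^ 2) * Y <= Y).
  { assert (0 <= u - u ^ 2 <= 1) by nra. nra. }
  apply Rabs_le_between in B. apply Rabs_le_between. lra.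
Qed.

Lemma antiderivative_bound_lt (u Y r C eps : R) : 0 < eps -> 0 <= C -> 0 < r ->
  6 * (C + 1) ^ 2 / eps < r -> 1 - u < eps / (3 * (C + 1)) -> Y < eps / 27 ->
  2 * (C + 1) ^ 2 / r + (1 - u) * C + 9 * Y < eps.
Proof.
  intros Heps HC Hr Hbr Hu HY.
  assert (A1 : 2 * (C + 1) ^ 2 / r < eps / 3).
  { apply (Rmult_lt_reg_r (r / 3 * / eps)).
    { apply Rmult_lt_0_compat; [lra | apply Rinv_0_lt_compat; lra]. }
    replace (2 * (C + 1) ^ 2 / r * (r / 3 * / eps)) with (6 * (C + 1) ^ 2 / eps * / 9) by (field; lra).
    replace (eps / 3 * (r / 3 * / eps)) with (r / 9) by (field; lra). lra. }
  assert (A2 : (1 - u) * C <= eps / 3 * (C / (C + 1))).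
  { apply Rle_trans with (eps / (3 * (C + 1)) * C).
    - apply Rmult_le_compat_r; lra.
    - right. field. lra. }
  assert (A3 : eps / 3 * (C / (C + 1)) <= eps / 3).
  { rewrite <- (Rmult_1_r (eps / 3)) at 2. apply Rmult_le_compat_l; [lra|].
    apply (Rmult_le_reg_r (C + 1)); [lra|]. unfold Rdiv. rewrite Rmult_assoc, Rinv_l; lra. }
  lra.
Qed.

(** * Static spherically symmetric solutions *)

Definition field_eqs_at (rho : R -> R) (V h p : R -> R) (r : R) : Prop :=
  let rh := rho (p r) in
  let V1 := Derive V r in
  let V2 := Derive (Derive V) r in
  let h1 := Derive h r in
  ex_derive V r /\ ex_derive (Derive V) r /\ ex_derive h r /\ ex_derive p r /\
  / h r * (V2 - h1 * V1 / (2 * h r) + 2 * V1 / r) = 4 * PI * (rh + 3 * p r) * V r /\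
  h1 / (r * h r) = / V r * (V2 - h1 * V1 / (2 * h r)) + 4 * PI * (rh - p r) * h r /\
  1 - / h r + r * h1 / (2 * (h r) ^ 2) = / V r * (r * V1 / h r) + 4 * PI * (rh - p r) * r ^ 2 /\
  Derive p r = - / V r * (rh + p r) * V1.

Section Solution.

Variables (rho : R -> R) (pmax : R) (V h p : R -> R) (Sf Srho : R -> Prop).
Hypothesis Heos : eos rho pmax.
Hypothesis bounds : forall r, 0 <= r -> 0 < V r /\ 0 < h r /\ 0 <= p r <= pmax.
Hypothesis p_C0 : C0_half p.
Hypothesis h_C0 : C0_half h.
Hypothesis rho_p_continuous : forall r, 0 < r -> ~ Srho r -> continuous (fun r => rho (p r)) r.
Hypothesis rho_p_lims : onesided_lims (fun r => rho (p r)).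
Hypothesis field_eqs_off : forall r, 0 < r -> ~ Sf r -> field_eqs_at rho V h p r.
Hypotheses (Sf_locfin : locfin Sf) (Srho_locfin : locfin Srho).

Definition exp_Gam_p (s : R) : R := exp (- Gam_ext rho (p s)).
Definition J0_integral_p (s : R) : R := J0_integral rho (p s).
Definition G : R -> R := antiderivative exp_Gam_p h p J0_integral_p.

Lemma p_continuous (r : R) : 0 < r -> continuous p r.
Proof. apply p_C0. Qed.

Lemma p_pos_near (r : R) : 0 < r -> 0 < p r -> exists d, 0 < d /\
  forall s, Rabs (s - r) < d -> 0 < p s <= pmax /\ continuous p s /\ 0 < s.
Proof.
  intros Hr Hp. destruct (continuous_pos_near p r (p_continuous r Hr) Hp) as [d [Hd H]].
  exists (Rmin d r). split; [apply Rmin_pos; lra|]. intros s Hs.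
  assert (Rmin d r <= d) by apply Rmin_l. assert (Rmin d r <= r) by apply Rmin_r.
  apply Rabs_lt_between' in Hs as Hs'.
  split; [split; [apply H; lra | apply bounds; lra]|]. split; [apply p_continuous|]; lra.
Qed.

Section AtARegularPoint.

Variable r : R.
Hypotheses (r_pos : 0 < r) (p_r_pos : 0 < p r) (r_not_Srho : ~ Srho r).

Lemma is_derive_Gam_ext_p (dp : R) : is_derive p r dp ->
  is_derive (fun s => Gam_ext rho (p s)) r (dp * dGam rho (p r)).
Proof.
  destruct (p_pos_near r r_pos p_r_pos) as [d [Hd Hnear]].
  pose proof (rho_pos rho pmax Heos (p r) ltac:(split; [lra | apply bounds; lra])).
  apply (is_derive_comp_primitive (Gam_ext rho) (dGam rho) p (fun q => 0 < q <= pmax) r d).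
  - intros x y Hx Hy. now apply (Gam_ext_sub rho pmax Heos).
  - exact Hd.
  - intros s Hs. now destruct (Hnear s Hs) as [? [? _]].
  - apply continuous_Rinv_comp; [|lra].
    apply continuous_Rplus; [now apply rho_p_continuous | now apply p_continuous].
Qed.

Lemma is_derive_J0_integral_p (dp : R) : is_derive p r dp ->
  is_derive J0_integral_p r (dp * J0_kernel rho (p r)).
Proof.
  destruct (p_pos_near r r_pos p_r_pos) as [d [Hd Hnear]].
  pose proof (rho_pos rho pmax Heos (p r) ltac:(split; [lra | apply bounds; lra])).
  apply (is_derive_comp_primitive (J0_integral rho) (J0_kernel rho) p (fun q => 0 <= q <= pmax) r d).
  - intros x y Hx Hy. now apply (J0_integral_sub rho pmax Heos).
  - exact Hd.
  - intros s Hs. destruct (Hnear s Hs) as [? [? _]]. split; [lra | assumption].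
  - apply (continuous_ext_loc _
      (fun s => kernel_form (exp (- Gam_ext rho (p s))) (rho (p s) / (rho (p s) + p s)))).
    + exists (mkposreal d Hd). intros s Hs.
      symmetry. apply (J0_kernel_form rho pmax Heos). now destruct (Hnear s Hs).
    + apply continuous_kernel_form.
      * apply continuous_exp_comp, continuous_Ropp.
        apply (continuous_comp_in _ _ 0 pmax r d); auto.
        -- apply (Gam_ext_continuous_in rho pmax Heos). split; [lra | apply bounds; lra].
        -- apply p_continuous, r_pos.
        -- intros s Hs. destruct (Hnear s Hs) as [? _]. lra.
      * apply continuous_Rdiv; [now apply rho_p_continuous | | lra].
        apply continuous_Rplus; [now apply rho_p_continuous | now apply p_continuous].
Qed.

Lemma is_derive_G : ~ Sf r -> is_derive G r (radial_integrand rho p r).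
Proof.
  intros HnS.
  destruct (field_eqs_off r r_pos HnS) as [HV [HdV [Hh [Hpd [Lap [RR [TT Euler]]]]]]].
  destruct (bounds r ltac:(lra)) as [HVr [Hhr Hpr]].
  pose proof (rho_pos rho pmax Heos (p r) ltac:(lra)) as Hrho.
  destruct (field_eqs_first_order r (h r) (Derive h r) (rho (p r)) (p r) (Derive V r)
              (Derive (Derive V) r) (V r)) as [EV1 Eh]; auto.
  set (dp := Derive p r).
  assert (Hdp : is_derive p r dp) by (apply Derive_correct; auto).
  assert (Hu : is_derive exp_Gam_p r (exp_Gam_p r * - (dp * dGam rho (p r)))).
  { assert (HG : is_derive (fun s => - Gam_ext rho (p s)) r (- (dp * dGam rho (p r))))
      by (apply (is_derive_opp (fun s => Gam_ext rho (p s))); now apply is_derive_Gam_ext_p).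
    pose proof (is_derive_comp exp _ r _ _
                  (proj2 (is_derive_Reals _ _ _) (derivable_pt_lim_exp _)) HG) as H.
    replace (exp_Gam_p r * - (dp * dGam rho (p r)))
      with (scal (- (dp * dGam rho (p r))) (exp (- Gam_ext rho (p r))))
      by (unfold scal; simpl; unfold mult; simpl; unfold exp_Gam_p; ring).
    exact H. }
  replace (radial_integrand rho p r) with
    (4 * PI * r ^ 2 * (- (rho (p r) * (/ (2 * rho (p r)) * (1 - exp_Gam_p r) *
       (rho (p r) + rho (p r) * exp_Gam_p r + 6 * p r * exp_Gam_p r)
       - 3 * / rho (p r) * J0_integral_p r))))
    by (unfold radial_integrand, J0, H0, exp_Gam_p, J0_integral_p, J0_integral;
        now rewrite Gam_ext_pos by lra).
  apply (is_derive_antiderivative _ _ _ _ r (exp_Gam_p r * - (dp * dGam rho (p r))) (Derive h r) dp (dp * J0_kernel rho (p r))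
           (rho (p r)) (Derive V r / V r)); auto; try lra.
  - apply Derive_correct, Hh.
  - now apply is_derive_J0_integral_p.
  - unfold dp. rewrite Euler. field. lra.
  - unfold J0_kernel, H0, exp_Gam_p. rewrite Gam_ext_pos by lra. ring.
Qed.

End AtARegularPoint.

Lemma p_continuous_in (x y s : R) : 0 <= x -> x <= s <= y -> continuous_in p x y s.
Proof.
  apply continuous_in_half_line; [apply p_C0|]. apply lim_right_filterlim, p_C0.
Qed.

Lemma h_continuous_in (x y s : R) : 0 <= x -> x <= s <= y -> continuous_in h x y s.
Proof.
  apply continuous_in_half_line; [apply h_C0|]. apply lim_right_filterlim, h_C0.
Qed.

Lemma exp_Gam_p_continuous_in (x y s : R) : 0 <= x -> x <= s <= y ->
  continuous_in exp_Gam_p x y s.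
Proof.
  intros Hx Hs. apply continuous_in_of_clamp; [exact Hs|].
  apply continuous_exp_comp, continuous_Ropp.
  apply (continuous_comp_clamp (fun t => Gam_ext rho (p t))); [lra|].
  rewrite clamp_id by lra.
  apply (continuous_in_comp (Gam_ext rho) p 0 pmax); [| apply p_continuous_in; lra | | exact Hs].
  - apply (Gam_ext_continuous_in rho pmax Heos), bounds. lra.
  - intros t Ht. apply bounds. lra.
Qed.

Lemma J0_integral_p_continuous_in (x y s : R) : 0 <= x -> x <= s <= y ->
  continuous_in J0_integral_p x y s.
Proof.
  intros Hx Hs. apply (continuous_in_comp (J0_integral rho) p 0 pmax); [| apply p_continuous_in; lra | | exact Hs].
  - apply (J0_integral_continuous_in rho pmax Heos), bounds. lra.
  - intros t Ht. apply bounds. lra.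
Qed.

Lemma G_continuous_in (x y s : R) : 0 <= x < y -> x <= s <= y -> continuous_in G x y s.
Proof.
  intros Hxy Hs. apply continuous_in_of_clamp; [exact Hs|].
  assert (Hp := continuous_clamp_of_in p x y s ltac:(lra) (fun t => p_continuous_in x y t ltac:(lra))).
  assert (Hh := continuous_clamp_of_in h x y s ltac:(lra) (fun t => h_continuous_in x y t ltac:(lra))).
  assert (Hu := continuous_clamp_of_in exp_Gam_p x y s ltac:(lra)
                  (fun t => exp_Gam_p_continuous_in x y t ltac:(lra))).
  assert (HI := continuous_clamp_of_in J0_integral_p x y s ltac:(lra)
                  (fun t => J0_integral_p_continuous_in x y t ltac:(lra))).
  assert (Hhi : continuous (fun t => / h (clamp x y t)) s).
  { apply continuous_Rinv_comp; [exact Hh|]. apply Rgt_not_eq, bounds.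
    pose proof (clamp_in x y s). lra. }
  pose proof (continuous_clamp x y s).
  unfold G, antiderivative. continuity_R.
Qed.

Lemma radial_integrand_eq (z : R) : 0 < z -> 0 < p z -> radial_integrand rho p z =
  4 * PI * z ^ 2 * (- (/ 2 * (1 - exp_Gam_p z)
    * (rho (p z) + rho (p z) * exp_Gam_p z + 6 * p z * exp_Gam_p z) - 3 * J0_integral_p z)).
Proof.
  intros Hz Hp. pose proof (rho_pos rho pmax Heos (p z) ltac:(split; [lra | apply bounds; lra])).
  unfold radial_integrand, J0, H0, exp_Gam_p, J0_integral_p, J0_integral.
  rewrite Gam_ext_pos by lra. set (E := exp _). set (I := RInt _ _ _). field. lra.
Qed.

Lemma is_RInt_radial_integrand_piece (x y : R) : 0 <= x -> x < y ->
  (forall z, x < z < y -> 0 < p z /\ ~ Sf z /\ ~ Srho z) ->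
  is_RInt (radial_integrand rho p) x y (G y - G x).
Proof.
  intros Hx Hxy Hgood.
  destruct rho_p_lims as [Hlim Hlim0].
  destruct (continuous_nonneg_extension (fun r => rho (p r)) x y Hxy) as [rt [Hrt [_ Hrteq]]].
  - intros z Hz. apply rho_p_continuous; [lra | apply Hgood, Hz].
  - intros z Hz. apply Rlt_le, (rho_pos rho pmax Heos).
    split; [apply Hgood, Hz | apply bounds; lra].
  - destruct (Req_dec x 0) as [->|Hx0].
    + destruct Hlim0 as [L HL]. exists L. now apply lim_right_filterlim.
    + destruct (Hlim x ltac:(lra)) as [_ [L HL]]. exists L. now apply lim_right_filterlim.
  - destruct (Hlim y ltac:(lra)) as [[L HL] _]. exists L. now apply lim_left_filterlim.
  - set (phi := fun t => 4 * PI * clamp x y t ^ 2 * (- (/ 2 * (1 - exp_Gam_p (clamp x y t))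
      * (rt t + rt t * exp_Gam_p (clamp x y t) + 6 * p (clamp x y t) * exp_Gam_p (clamp x y t))
      - 3 * J0_integral_p (clamp x y t)))).
    assert (Heq : forall z, x < z < y -> phi z = radial_integrand rho p z).
    { intros z Hz. rewrite radial_integrand_eq by (try apply Hgood; lra).
      unfold phi. rewrite clamp_id, Hrteq by lra. reflexivity. }
    apply (is_RInt_ext phi).
    { intros z Hz. rewrite Rmin_left, Rmax_right in Hz by lra. now apply Heq. }
    apply is_RInt_derive_piece; [exact Hxy | | | apply G_continuous_in; lra ..].
    + intros t.
      pose proof (Hrt t). pose proof (continuous_clamp x y t).
      pose proof (continuous_clamp_of_in p x y t Hxy (fun s => p_continuous_in x y s Hx)).
      pose proof (continuous_clamp_of_in exp_Gam_p x y t Hxy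
                    (fun s => exp_Gam_p_continuous_in x y s Hx)).
      pose proof (continuous_clamp_of_in J0_integral_p x y t Hxy
                    (fun s => J0_integral_p_continuous_in x y s Hx)).
      unfold phi. continuity_R.
    + intros z Hz. rewrite Heq by exact Hz.
      destruct (Hgood z Hz) as [Hpz [HSf HSrho]]. apply is_derive_G; auto. lra.
Qed.

Lemma G_0 : G 0 = 0.
Proof.
  unfold G, antiderivative. assert (0 < h 0) by (apply bounds; lra). field. lra.
Qed.

Lemma is_RInt_radial_integrand (b : R) : 0 < b -> (forall r, 0 < r < b -> 0 < p r) ->
  is_RInt (radial_integrand rho p) 0 b (G b).
Proof.
  intros Hb Hpos.
  destruct (Sf_locfin b) as [lf Hlf]. destruct (Srho_locfin b) as [lr Hlr].
  replace (G b) with (G b - G 0) by (rewrite G_0; ring).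
  apply (interval_prop_of_pieces (fun x y => is_RInt (radial_integrand rho p) x y (G y - G x))
           (lf ++ lr)); [| | lra |].
  - intros x. rewrite Rminus_eq_0. apply (is_RInt_point (V:=R_NormedModule)).
  - intros x y z Hxy Hyz. replace (G z - G x) with (plus (G y - G x) (G z - G y))
      by (unfold plus; simpl; ring).
    now apply (is_RInt_Chasles (V:=R_NormedModule) _ x y z).
  - intros x y Hx Hxy Hy Hz. apply is_RInt_radial_integrand_piece; [lra | exact Hxy |].
    intros z Hz'. split; [apply Hpos; lra|].
    split; intros HS; apply (Hz z Hz'), in_or_app; [left; apply Hlf | right; apply Hlr]; auto; lra.
Qed.

Lemma G_surface (Rad M : R) : 0 < Rad -> p Rad = 0 ->
  V Rad ^ 2 = 1 - 2 * M / Rad -> h Rad = / V Rad ^ 2 ->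
  G Rad = M ^ 2 / Rad * / (1 - 2 * M / Rad).
Proof.
  intros HR Hp HV Hh.
  assert (Hu : exp_Gam_p Rad = 1)
    by (unfold exp_Gam_p; rewrite Hp, Gam_ext_0, Ropp_0, exp_0; reflexivity).
  assert (HI : J0_integral_p Rad = 0) by (unfold J0_integral_p; rewrite Hp; apply J0_integral_0).
  destruct (bounds Rad ltac:(lra)) as [_ [Hhp _]].
  assert (Hne : 1 - 2 * M / Rad <> 0) by (intros E; rewrite Hh, HV, E, Rinv_0 in Hhp; lra).
  unfold G, antiderivative. rewrite Hu, HI, Hp, Hh, HV, Rinv_inv.
  field. split; [lra|]. intros E. apply Hne.
  replace (2 * M) with Rad by lra. field. lra.
Qed.

Lemma p_bound_regular (r C : R) : 0 < r -> ~ Sf r -> 0 < p r -> 1 / 2 < V r -> 1 / 2 < h r ->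
  Rabs (Derive V r) <= C / r ^ 2 -> Rabs (Derive h r) <= C / r ^ 2 -> p r <= 3 * C / r ^ 3.
Proof.
  intros Hr HnS Hp HV Hh HdV Hdh.
  destruct (field_eqs_off r Hr HnS) as [_ [_ [_ [_ [Lap [RR [TT _]]]]]]].
  destruct (bounds r ltac:(lra)) as [HVr [Hhr Hpr]].
  pose proof (rho_pos rho pmax Heos (p r) ltac:(lra)).
  destruct (field_eqs_first_order r (h r) (Derive h r) (rho (p r)) (p r) (Derive V r)
              (Derive (Derive V) r) (V r)) as [EV1 _]; auto.
  assert (HiV : / V r <= 2) by (apply (Rmult_le_reg_r (V r)); [lra|]; rewrite Rinv_l; lra).
  assert (Hih : / (2 * h r) <= 1) by (apply (Rmult_le_reg_r (2 * h r)); [lra|]; rewrite Rinv_l; lra).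
  assert (B1 : Derive V r / V r <= 2 * (C / r ^ 2)).
  { unfold Rdiv at 1. pose proof (Rle_abs (Derive V r)). pose proof (Rabs_pos (Derive V r)).
    assert (0 < / V r) by (apply Rinv_0_lt_compat; lra). nra. }
  assert (B2 : Derive h r / (2 * h r) <= C / r ^ 2).
  { unfold Rdiv at 1. pose proof (Rle_abs (Derive h r)). pose proof (Rabs_pos (Derive h r)).
    assert (0 < / (2 * h r)) by (apply Rinv_0_lt_compat; lra). nra. }
  assert (HPI : 3 < PI) by (pose proof PI2_3_2; lra).
  set (Q := rho (p r) + p r) in EV1.
  assert (HQ : Q * r <= 3 * C / r ^ 2).
  { assert (1 <= 4 * PI * h r) by nra.
    assert (0 < Q * r) by (unfold Q; apply Rmult_lt_0_compat; lra).
    assert (Q * r <= 4 * PI * Q * h r * r)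
      by (replace (4 * PI * Q * h r * r) with (4 * PI * h r * (Q * r)) by ring; nra).
    replace (3 * C / r ^ 2) with (2 * (C / r ^ 2) + C / r ^ 2) by (field; lra). lra. }
  assert (Q <= 3 * C / r ^ 3).
  { apply (Rmult_le_reg_r r); [lra|].
    replace (3 * C / r ^ 3 * r) with (3 * C / r ^ 2) by (field; lra). exact HQ. }
  unfold Q in *. lra.
Qed.

Section Decay.

Hypothesis V_AF : Oinf (fun r => 1 - V r) 1.
Hypothesis h_AF : Oinf (fun r => h r - 1) 1.
Hypothesis p_pos : forall r, 0 <= r -> 0 < p r.

Lemma h_near_1 : exists R0 C, 0 < R0 /\ 0 <= C /\ forall r, R0 < r ->
  1 / 2 < h r <= 2 /\ Rabs (r * (1 - / h r) / 2) <= C.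
Proof.
  destruct (Oinf_1_bound _ h_AF) as [R0 [C [HR0 [HC Hb]]]].
  exists (Rmax R0 (2 * C + 1)), C. split; [apply Rlt_le_trans with R0; [lra | apply Rmax_l]|].
  split; [exact HC|]. intros r Hr.
  pose proof (Rmax_l R0 (2 * C + 1)). pose proof (Rmax_r R0 (2 * C + 1)).
  destruct (Hb r ltac:(lra)) as [Hh _].
  assert (HCr : C / r < 1 / 2).
  { apply (Rmult_lt_reg_r r); [lra|]. unfold Rdiv. rewrite Rmult_assoc, Rinv_l; lra. }
  apply Rabs_le_between in Hh as Hh'.
  split; [lra|].
  replace (r * (1 - / h r) / 2) with ((h r - 1) * r * / (2 * h r)) by (field; lra).
  rewrite Rabs_mult, (Rabs_right (/ (2 * h r))) by (apply Rle_ge, Rlt_le, Rinv_0_lt_compat; lra).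
  rewrite Rabs_mult, (Rabs_right r) by lra.
  assert (Rabs (h r - 1) * r <= C).
  { apply (Rmult_le_compat_r r) in Hh; [|lra].
    unfold Rdiv in Hh. rewrite Rmult_assoc, Rinv_l, Rmult_1_r in Hh; lra. }
  assert (/ (2 * h r) <= 1) by (apply (Rmult_le_reg_r (2 * h r)); [lra|]; rewrite Rinv_l; lra).
  assert (0 <= Rabs (h r - 1) * r) by (apply Rmult_le_pos; [apply Rabs_pos | lra]).
  assert (0 < / (2 * h r)) by (apply Rinv_0_lt_compat; lra).
  nra.
Qed.

(** At the break points of the field equations the bound follows from continuity of p. *)
Lemma p_decay : exists R1 K, 1 <= R1 /\ 0 <= K /\ forall r, R1 < r -> p r <= K / r ^ 3.
Proof.
  destruct (Oinf_1_bound _ V_AF) as [Rv [Cv [HRv [HCv HbV]]]].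
  destruct (Oinf_1_bound _ h_AF) as [Rh [Ch [HRh [HCh HbH]]]].
  set (C := Rmax Cv Ch). assert (Cv <= C) by apply Rmax_l. assert (Ch <= C) by apply Rmax_r.
  set (R1 := Rmax (Rmax 1 (2 * C + 1)) (Rmax Rv Rh)).
  assert (1 <= R1 /\ 2 * C + 1 <= R1 /\ Rv <= R1 /\ Rh <= R1) as [H1 [H2 [H3 H4]]].
  { unfold R1. pose proof (Rmax_l (Rmax 1 (2 * C + 1)) (Rmax Rv Rh)).
    pose proof (Rmax_r (Rmax 1 (2 * C + 1)) (Rmax Rv Rh)).
    pose proof (Rmax_l 1 (2 * C + 1)). pose proof (Rmax_r 1 (2 * C + 1)).
    pose proof (Rmax_l Rv Rh). pose proof (Rmax_r Rv Rh). lra. }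
  exists R1, (3 * C). split; [exact H1|]. split; [lra|]. intros r Hr.
  destruct (Sf_locfin (r + 1)) as [l Hl].
  apply (continuous_le_of_le_right p (fun s => 3 * C / s ^ 3) r 1 l); [lra | apply p_continuous; lra | |].
  { apply continuous_Rdiv; [apply continuous_const | | apply pow_nonzero; lra].
    apply continuous_Rpow, continuous_id. }
  intros s Hs Hsl.
  assert (HCs : C / s < 1 / 2).
  { apply (Rmult_lt_reg_r s); [lra|]. unfold Rdiv. rewrite Rmult_assoc, Rinv_l; lra. }
  assert (0 < / s ^ 2) by (apply Rinv_0_lt_compat, pow_lt; lra).
  assert (0 < / s) by (apply Rinv_0_lt_compat; lra).
  assert (HnS : ~ Sf s) by (intros HS; apply Hsl, Hl; [exact HS | lra]).
  destruct (field_eqs_off s ltac:(lra) HnS) as [HV [_ [Hh _]]].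
  destruct (HbV s ltac:(lra)) as [HV0 HV1]. destruct (HbH s ltac:(lra)) as [Hh0 Hh1].
  rewrite (Derive_minus (fun _ => 1) V s (ex_derive_const 1 s) HV), Derive_const, Rminus_0_l,
    Rabs_Ropp in HV1.
  rewrite (Derive_minus h (fun _ => 1) s Hh (ex_derive_const 1 s)), Derive_const, Rminus_0_r in Hh1.
  apply Rabs_le_between in HV0. apply Rabs_le_between in Hh0.
  apply p_bound_regular; [lra | exact HnS | apply p_pos; lra | | | |].
  - assert (Cv / s <= C / s) by (apply Rmult_le_compat_r; lra). lra.
  - assert (Ch / s <= C / s) by (apply Rmult_le_compat_r; lra). lra.
  - eapply Rle_trans; [exact HV1|]. apply Rmult_le_compat_r; lra.
  - eapply Rle_trans; [exact Hh1|]. apply Rmult_le_compat_r; lra.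
Qed.

Lemma p_vanishes_at_infinity (eps : R) : 0 < eps -> exists B, forall b, B < b -> p b < eps.
Proof.
  intros Heps. destruct p_decay as [R1 [K [HR1 [HK Hp]]]].
  exists (Rmax R1 (K / eps + 1)). intros b Hb.
  pose proof (Rmax_l R1 (K / eps + 1)). pose proof (Rmax_r R1 (K / eps + 1)).
  eapply Rle_lt_trans; [apply Hp; lra|].
  assert (Hb3 : b <= b ^ 3) by (simpl; nra).
  apply Rle_lt_trans with (K / b).
  - unfold Rdiv. apply Rmult_le_compat_l; [exact HK|]. apply Rinv_le_contravar; lra.
  - apply (Rmult_lt_reg_r b); [lra|]. unfold Rdiv. rewrite Rmult_assoc, Rinv_l, Rmult_1_r by lra.
    assert (K / eps < b) by lra.
    apply (Rmult_lt_compat_r eps) in H1; [|exact Heps].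
    unfold Rdiv in H1. rewrite Rmult_assoc, Rinv_l, Rmult_1_r in H1 by lra. nra.
Qed.

(** q <= (L + 1) rho(q) for small q, where L = lim q / rho(q), and rho(p(r)) decays
    faster than r^-3. *)
Lemma r3_p_vanishes_at_infinity (e0 : R) : 0 < e0 -> Oinf (fun r => rho (p r)) (3 + e0) ->
  forall eps, 0 < eps -> exists B, forall b, B < b -> 4 * PI * b ^ 3 * p b < eps.
Proof.
  intros He0 Hrho eps Heps.
  destruct Heos as [Hpm [_ [_ [_ [L HL]]]]].
  destruct (lim_right_filterlim _ _ _ HL 1 Rlt_0_1) as [dL [HdL HL1]].
  set (dd := Rmin dL pmax). assert (dd <= dL) by apply Rmin_l. assert (dd <= pmax) by apply Rmin_r.
  assert (Hdd : 0 < dd) by (apply Rmin_pos; lra).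
  assert (Hsmall : forall q, 0 < q < dd -> q <= (Rabs L + 1) * rho q).
  { intros q Hq. pose proof (rho_pos rho pmax Heos q ltac:(lra)).
    specialize (HL1 q ltac:(lra)). apply Rabs_lt_between' in HL1. pose proof (Rle_abs L).
    replace q with (/ rho q * q * rho q) at 1 by (field; lra). apply Rmult_le_compat_r; lra. }
  destruct (Oinf_bound _ _ Hrho) as [Rr [Cr [_ Hr]]].
  destruct (p_vanishes_at_infinity dd Hdd) as [Bp HBp].
  set (A := 4 * PI * (Rabs L + 1) * Rabs Cr).
  destruct (Rpower_unbounded e0 (A / eps) He0) as [BY [HBY1 HBY]].
  exists (Rmax (Rmax Rr Bp) BY). intros b Hb.
  pose proof (Rmax_l (Rmax Rr Bp) BY). pose proof (Rmax_r (Rmax Rr Bp) BY).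
  pose proof (Rmax_l Rr Bp). pose proof (Rmax_r Rr Bp).
  assert (HPI : 0 < PI) by apply PI_RGT_0.
  assert (Hb3 : 0 < b ^ 3) by (apply pow_lt; lra).
  assert (Hbe : 0 < Rpower b e0) by apply exp_pos.
  assert (HRp : Rpower b (3 + e0) = b ^ 3 * Rpower b e0).
  { rewrite Rpower_plus. f_equal. replace 3 with (INR 3) by (simpl; ring). apply Rpower_pow. lra. }
  specialize (Hr b ltac:(lra)). rewrite HRp in Hr. apply Rabs_le_between in Hr.
  assert (Hrho_b : rho (p b) <= Rabs Cr / (b ^ 3 * Rpower b e0)).
  { eapply Rle_trans; [apply Hr|]. apply Rmult_le_compat_r; [|apply Rle_abs].
    apply Rlt_le, Rinv_0_lt_compat, Rmult_lt_0_compat; assumption. }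
  assert (Hpb : p b <= (Rabs L + 1) * (Rabs Cr / (b ^ 3 * Rpower b e0))).
  { eapply Rle_trans; [apply Hsmall; split; [apply p_pos | apply HBp]; lra|].
    apply Rmult_le_compat_l; [pose proof (Rabs_pos L); lra | exact Hrho_b]. }
  apply Rle_lt_trans with (A / Rpower b e0).
  - replace (A / Rpower b e0) with (4 * PI * b ^ 3 * ((Rabs L + 1) * (Rabs Cr / (b ^ 3 * Rpower b e0))))
      by (unfold A; field; lra).
    apply Rmult_le_compat_l; [nra | exact Hpb].
  - specialize (HBY b ltac:(lra)).
    apply (Rmult_lt_reg_r (Rpower b e0)); [exact Hbe|].
    replace (A / Rpower b e0 * Rpower b e0) with A by (field; lra).
    replace A with (A / eps * eps) by (field; lra). nra.
Qed.

Lemma exp_Gam_p_tends_to_1 (eps : R) : 0 < eps ->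
  exists B, forall b, B < b -> 1 - exp_Gam_p b < eps.
Proof.
  intros Heps.
  destruct (Gam_ext_continuous_in rho pmax Heos 0 ltac:(pose proof (pmax_pos rho pmax Heos); lra)
              eps Heps) as [d [Hd HG]].
  destruct (p_vanishes_at_infinity (Rmin d pmax) ltac:(apply Rmin_pos; [lra | apply (pmax_pos rho pmax Heos)]))
    as [B HB].
  exists (Rmax B 0). intros b Hb. pose proof (Rmax_l B 0). pose proof (Rmax_r B 0).
  assert (Hpb : 0 < p b < Rmin d pmax) by (split; [apply p_pos | apply HB]; lra).
  pose proof (Rmin_l d pmax). pose proof (Rmin_r d pmax).
  specialize (HG (p b) ltac:(lra)). rewrite Gam_ext_0, !Rminus_0_r in HG.
  assert (Gam_ext rho (p b) < eps).
  { apply Rle_lt_trans with (Rabs (Gam_ext rho (p b))); [apply Rle_abs|].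
    apply HG. rewrite Rabs_right; lra. }
  pose proof (exp_ineq1_le (- Gam_ext rho (p b))). unfold exp_Gam_p. lra.
Qed.

Lemma G_vanishes_at_infinity (e0 : R) : 0 < e0 -> Oinf (fun r => rho (p r)) (3 + e0) ->
  forall eps, 0 < eps -> exists B, forall b, B < b -> Rabs (G b - 0) < eps.
Proof.
  intros He0 Hrho eps Heps.
  destruct h_near_1 as [Rh [C [HRh [HC Hh]]]].
  destruct (r3_p_vanishes_at_infinity e0 He0 Hrho (Rmin 1 (eps / 27)) ltac:(apply Rmin_pos; lra))
    as [BY HBY].
  destruct (exp_Gam_p_tends_to_1 (eps / (3 * (C + 1))) ltac:(apply Rdiv_lt_0_compat; lra))
    as [Bu HBu].
  exists (Rmax (Rmax Rh BY) (Rmax Bu (6 * (C + 1) ^ 2 / eps))). intros b Hb.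
  pose proof (Rmax_l (Rmax Rh BY) (Rmax Bu (6 * (C + 1) ^ 2 / eps))).
  pose proof (Rmax_r (Rmax Rh BY) (Rmax Bu (6 * (C + 1) ^ 2 / eps))).
  pose proof (Rmax_l Rh BY). pose proof (Rmax_r Rh BY).
  pose proof (Rmax_l Bu (6 * (C + 1) ^ 2 / eps)). pose proof (Rmax_r Bu (6 * (C + 1) ^ 2 / eps)).
  assert (Hbpos : 0 < b) by lra.
  destruct (Hh b ltac:(lra)) as [Hhb HX].
  set (u := exp_Gam_p b). set (X := b * (1 - / h b) / 2). set (Y := 4 * PI * b ^ 3 * p b).
  destruct (bounds b ltac:(lra)) as [_ [_ Hpb]].
  assert (Hu : 0 < u <= 1) by apply exp_opp_nonneg_bound, (Gam_ext_nonneg rho pmax Heos), Hpb.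
  assert (HY : 0 <= Y <= 1 /\ Y < eps / 27).
  { pose proof (HBY b ltac:(lra)) as HYb. fold Y in HYb. pose proof (Rmin_l 1 (eps / 27)). pose proof (Rmin_r 1 (eps / 27)).
    assert (0 <= Y).
    { unfold Y. pose proof (p_pos b ltac:(lra)). pose proof PI_RGT_0.
      assert (0 < b ^ 3) by (apply pow_lt; lra).
      apply Rmult_le_pos; [apply Rmult_le_pos|]; lra. }
    lra. }
  destruct HY as [HY HY27].
  assert (HT : Rabs (4 * PI * b ^ 3 * J0_integral_p b) <= 8 * Y).
  { unfold J0_integral_p, Y. pose proof PI_RGT_0. assert (0 < b ^ 3) by (apply pow_lt; lra).
    assert (0 <= 4 * PI * b ^ 3) by (apply Rmult_le_pos; lra).
    rewrite Rabs_mult, (Rabs_right (4 * PI * b ^ 3)) by lra.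
    replace (8 * (4 * PI * b ^ 3 * p b)) with (4 * PI * b ^ 3 * (8 * p b)) by ring.
    apply Rmult_le_compat_l; [lra|]. apply (J0_integral_bound rho pmax Heos). lra. }
  replace (G b - 0) with (u ^ 2 * (X + Y) ^ 2 * h b / b - (1 - u ^ 2) * X / 2 + (u ^ 2 - u) * Y
                          + 4 * PI * b ^ 3 * J0_integral_p b)
    by (unfold G, antiderivative, u, X, Y; field; lra).
  eapply Rle_lt_trans; [apply antiderivative_bound; eauto; lra|].
  apply antiderivative_bound_lt; auto; [lra | apply HBu; lra].
Qed.

End Decay.

Lemma p_zero_outside (M Rad : R) : finite_extent V h p M Rad -> forall r, Rad <= r -> p r = 0.
Proof.
  intros [HR [Hiff _]] r Hr. destruct (bounds r ltac:(lra)) as [_ [_ Hpr]].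
  destruct (Req_dec (p r) 0) as [E|Hne]; [exact E|].
  assert (0 < p r) as Hpos%Hiff by lra; lra.
Qed.

Lemma rho_0_zero (M Rad k : R) : 0 < k -> Oinf (fun r => rho (p r)) k ->
  finite_extent V h p M Rad -> rho 0 = 0.
Proof.
  intros Hk Hrho Hfin. apply (Oinf_eventually_const (fun r => rho (p r)) k (rho 0) Rad Hk Hrho).
  intros r Hr. now rewrite (p_zero_outside M Rad Hfin r Hr).
Qed.

Lemma is_RInt_gen_finite_extent (M Rad : R) : rho 0 = 0 -> finite_extent V h p M Rad ->
  is_RInt_gen (radial_integrand rho p) (at_point 0) (Rbar_locally p_infty)
    (M ^ 2 / Rad * / (1 - 2 * M / Rad)).
Proof.
  intros Hrho0 Hfin. pose proof (p_zero_outside M Rad Hfin) as Hp0.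
  destruct Hfin as [HR [Hiff Hext]]. destruct (Hext Rad ltac:(lra)) as [HVR HhR].
  apply (is_RInt_gen_of_partial _ (fun _ => M ^ 2 / Rad * / (1 - 2 * M / Rad)) _ Rad).
  - intros b Hb.
    rewrite <- (Rplus_0_r (M ^ 2 / Rad * / (1 - 2 * M / Rad))).
    apply (is_RInt_Chasles (V:=R_NormedModule) _ 0 Rad b).
    + rewrite <- (G_surface Rad M HR (Hp0 Rad (Rle_refl Rad)) HVR HhR).
      apply is_RInt_radial_integrand; [exact HR|]. intros r Hr. apply Hiff; lra.
    + apply (is_RInt_ext (fun _ => 0)).
      * intros z Hz. rewrite Rmin_left, Rmax_right in Hz by lra.
        unfold radial_integrand. rewrite Hp0, Hrho0 by lra.
        rewrite Rmult_0_l, Ropp_0, Rmult_0_r. reflexivity.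
      * pose proof (is_RInt_const (V:=R_NormedModule) Rad b 0) as Hc.
        replace (scal (b - Rad) (0 : R_NormedModule)) with 0 in Hc
          by (unfold scal; simpl; unfold mult; simpl; ring).
        exact Hc.
  - intros eps Heps. exists 0. intros b _. rewrite Rminus_eq_0, Rabs_R0. exact Heps.
Qed.

Lemma is_RInt_gen_extends_to_infinity (e0 : R) : 0 < e0 ->
  Oinf (fun r => 1 - V r) 1 -> Oinf (fun r => h r - 1) 1 -> Oinf (fun r => rho (p r)) (3 + e0) ->
  extends_to_infinity p ->
  is_RInt_gen (radial_integrand rho p) (at_point 0) (Rbar_locally p_infty) 0.
Proof.
  intros He0 HV Hh Hrho Hinf.
  apply (is_RInt_gen_of_partial _ G _ 0).
  - intros b Hb. apply is_RInt_radial_integrand; [exact Hb|]. intros r Hr. apply Hinf. lra.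
  - now apply (G_vanishes_at_infinity HV Hh Hinf e0).
Qed.

End Solution.

Theorem proposition6 (rho : R -> R) (pmax : R) (V h p : R -> R) :
  eos rho pmax ->
  (forall r, 0 <= r -> 0 < V r /\ 0 < h r /\ 0 <= p r <= pmax) ->
  regular rho V h p ->
  field_eqs rho V h p ->
  AFMD rho V h p ->
  (forall M Rad, finite_extent V h p M Rad ->
     is_RInt_gen (radial_integrand rho p) (at_point 0) (Rbar_locally p_infty)
       (M ^ 2 / Rad * / (1 - 2 * M / Rad))) /\
  (extends_to_infinity p ->
     is_RInt_gen (radial_integrand rho p) (at_point 0) (Rbar_locally p_infty) 0).
Proof.
  intros Heos Hb [[Hpc _] [[Srho [HSloc [HSc HSl]]] [_ [Hhc _]]]] [Sf [HSfloc HSf]]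
    [e0 [He0 [HV [Hh Hrho]]]].
  split.
  - intros M Rad Hfin.
    eapply is_RInt_gen_finite_extent; eauto.
    eapply rho_0_zero with (k := 3 + e0); eauto. lra.
  - eapply is_RInt_gen_extends_to_infinity; eauto.
Qed.
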